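(* (a) Let $\mu$ be a real matrix measure on $[0,1]$ with canonical moments $U_n^\mu$, let $a<b$, $\gamma(x)=(b-a)x+a$, and let $\nu=\mu^\gamma$ be the image measure on $[a,b]$ with canonical moments $U_n^\nu$. Then $U_n^\nu=U_n^\mu$ whenever these are defined. (b) If a matrix measure on an interval $[a,b]$ is symmetric (invariant under the reflection $x\mapsto a+b-x$), then its odd canonical moments satisfy $U_{2n-1}=\tfrac12I_p$ whenever defined. (c) Let $\mu$ be a matrix measure on $[0,1]$ with canonical moments $U_n^\mu$ and let $\sigma$ be the symmetric matrix measure on $[-1,1]$ determined by $\sigma([-x,x])=\mu([0,x^2])$, with canonical moments $U_n^\sigma$. Then $U^\sigma_{2n-1}=\tfrac12I_p$ and $U^\sigma_{2n}=U^\mu_n$ whenever defined.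
   Context: A real matrix measure on an interval $[a,b]$ is a $p\times p$ matrix of signed Borel measures $\mu$ with $\mu(B)$ symmetric nonnegative definite for every Borel $B\subset[a,b]$ and $\mu([a,b])=I_p$; its moments are $T_k=\int x^kd\mu(x)$, $T_0=I_p$. For given moments $T_0,\dots,T_{k-1}$ of such a measure, let $T_k^+$ and $T_k^-$ denote the maximal and minimal matrices (in the Loewner order) $T$ such that $(T_1,\dots,T_{k-1},T)$ is the moment vector of a matrix measure on $[a,b]$. When $T_k^+-T_k^->0$ (positive definite), the ($k$th, symmetric) canonical moment is $U_k=(T_k^+-T_k^-)^{-1/2}(T_k-T_k^-)(T_k^+-T_k^-)^{-1/2}$; otherwise it is undefined. (For $[0,1]$ these extremes $S_k^\pm$ are given by explicit Hankel-matrix formulas and the canonical moments are defined whenever the moment vector lies in the interior of the moment space.) *)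

From Stdlib Require Import Reals Lra Lia.
Open Scope R_scope.

(** p x p real matrices, represented as functions; only indices < p matter. *)
Definition Mat := nat -> nat -> R.

Fixpoint sumR (n : nat) (f : nat -> R) : R :=
  match n with O => 0 | S m => sumR m f + f m end.

Definition meq (p : nat) (A B : Mat) : Prop :=
  forall i j, (i < p)%nat -> (j < p)%nat -> A i j = B i j.

Definition idm : Mat := fun i j => if Nat.eqb i j then 1 else 0.
Definition half_idm : Mat := fun i j => / 2 * idm i j.
Definition msub (A B : Mat) : Mat := fun i j => A i j - B i j.
Definition mmul (p : nat) (A B : Mat) : Mat :=
  fun i j => sumR p (fun l => A i l * B l j).

Definition qform (p : nat) (A : Mat) (v : nat -> R) : R :=
  sumR p (fun i => sumR p (fun j => v i * A i j * v j)).

Definition msym (p : nat) (A : Mat) : Prop :=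
  forall i j, (i < p)%nat -> (j < p)%nat -> A i j = A j i.

Definition psd (p : nat) (A : Mat) : Prop :=
  msym p A /\ forall v, 0 <= qform p A v.

Definition pd (p : nat) (A : Mat) : Prop :=
  msym p A /\ forall v, (exists i, (i < p)%nat /\ v i <> 0) -> 0 < qform p A v.

Definition loewner_le (p : nat) (A B : Mat) : Prop := psd p (msub B A).

Inductive borel : (R -> Prop) -> Prop :=
| borel_halfline (c : R) : borel (fun x => x <= c)
| borel_compl (A : R -> Prop) : borel A -> borel (fun x => ~ A x)
| borel_cunion (A : nat -> R -> Prop) :
    (forall n, borel (A n)) -> borel (fun x => exists n, A n x)
| borel_ext (A B : R -> Prop) : borel A -> (forall x, A x <-> B x) -> borel B.

(** A matrix-valued set function (only its values on Borel sets matter). *)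
Definition mmeasure := (R -> Prop) -> Mat.

Definition is_matrix_measure (p : nat) (a b : R) (mu : mmeasure) : Prop :=
  (forall B, borel B -> psd p (mu B)) /\
  (forall (A : nat -> R -> Prop) (C : R -> Prop),
      (forall n, borel (A n)) ->
      (forall n m x, n <> m -> A n x -> A m x -> False) ->
      borel C -> (forall x, C x <-> exists n, A n x) ->
      forall i j, (i < p)%nat -> (j < p)%nat ->
        Un_cv (fun N => sumR (S N) (fun n => mu (A n) i j)) (mu C i j)) /\
  (forall B, borel B -> (forall x, B x -> x < a \/ b < x) ->
      forall i j, (i < p)%nat -> (j < p)%nat -> mu B i j = 0) /\
  meq p (mu (fun x => a <= x <= b)) idm.

Definition cell (x : nat -> R) (l : nat) : R -> Prop :=
  fun t => ((l = O /\ x O <= t) \/ ((0 < l)%nat /\ x l < t)) /\ t <= x (S l).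

Definition is_integral (p : nat) (mu : mmeasure) (a b : R) (f : R -> R)
    (M : Mat) : Prop :=
  forall eps, 0 < eps -> exists delta, 0 < delta /\
    forall (n : nat) (x xi : nat -> R),
      (0 < n)%nat -> x O = a -> x n = b ->
      (forall l, (l < n)%nat ->
          x l < x (S l) /\ x (S l) - x l < delta /\ x l <= xi l <= x (S l)) ->
      forall i j, (i < p)%nat -> (j < p)%nat ->
        Rabs (sumR n (fun l => f (xi l) * mu (cell x l) i j) - M i j) < eps.

Definition is_moment (p : nat) (mu : mmeasure) (a b : R) (k : nat) (M : Mat)
  : Prop := is_integral p mu a b (fun x => x ^ k) M.

Definition moment_set (p : nat) (a b : R) (T : nat -> Mat) (k : nat)
    (T' : Mat) : Prop :=
  exists rho, is_matrix_measure p a b rho /\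
    (forall j, (1 <= j)%nat -> (j < k)%nat -> is_moment p rho a b j (T j)) /\
    is_moment p rho a b k T'.

(** canonical_moment p a b mu k U : the k-th (symmetric) canonical moment of
    mu (as a measure on [a,b]) is defined and equals U:
    U = (T+ - T-)^{-1/2} (T_k - T-) (T+ - T-)^{-1/2}, where T+ / T- are the
    Loewner-maximal / minimal elements of the moment_set, and T+ - T- > 0.
    S plays the role of (T+ - T-)^{-1/2}: the symmetric positive definite
    matrix with S S (T+ - T-) = I. *)
Definition canonical_moment (p : nat) (a b : R) (mu : mmeasure) (k : nat)
    (U : Mat) : Prop :=
  (1 <= k)%nat /\
  exists (T : nat -> Mat) (Tp Tm S : Mat),
    (forall j, (j <= k)%nat -> is_moment p mu a b j (T j)) /\
    moment_set p a b T k Tp /\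
    (forall T', moment_set p a b T k T' -> loewner_le p T' Tp) /\
    moment_set p a b T k Tm /\
    (forall T', moment_set p a b T k T' -> loewner_le p Tm T') /\
    pd p (msub Tp Tm) /\
    pd p S /\
    meq p (mmul p S (mmul p S (msub Tp Tm))) idm /\
    meq p U (mmul p S (mmul p (msub (T k) Tm) S)).

Definition image_affine (a b : R) (mu : mmeasure) : mmeasure :=
  fun B => mu (fun x => B ((b - a) * x + a)).

Definition symmetric_measure (p : nat) (a b : R) (mu : mmeasure) : Prop :=
  forall B, borel B -> meq p (mu B) (mu (fun x => B (a + b - x))).

(* A transformation of measures (push-
   forward under x |-> (b-a)x+a, under the reflection x |-> a+b-x, or the
   correspondence between measures on [0,1] and symmetric measures on [-1,1]
   given by x^2 and sqrt) induces a bijection between two moment sets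
   { T | (T_1,...,T_{k-1},T) is a moment vector } which is an affine map
   A |-> c A + C of matrices.  Such a map carries Loewner-extremal elements to
   Loewner-extremal elements, so T^+ - T^- and T_k - T^- are both multiplied
   by c.  For c > 0 the canonical-moment formula is invariant under this
   rescaling (by uniqueness of positive definite square roots); for the
   reflection c = -1 and the map fixes T_k, forcing T_k - T^- = (T^+ - T^-)/2. *)

From Stdlib Require Import Reals Lra Lia Classical ClassicalEpsilon.
Open Scope R_scope.

Lemma sumR_ext n f g : (forall l, (l < n)%nat -> f l = g l) -> sumR n f = sumR n g.
Proof.
  induction n as [|n IH]; simpl; intros H; auto.
  rewrite IH by (intros; apply H; lia). rewrite H by lia. reflexivity.
Qed.

Lemma sumR_plus n f g : sumR n (fun l => f l + g l) = sumR n f + sumR n g.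
Proof. induction n; simpl; [lra | rewrite IHn; lra]. Qed.

Lemma sumR_minus n f g : sumR n (fun l => f l - g l) = sumR n f - sumR n g.
Proof. induction n; simpl; [lra | rewrite IHn; lra]. Qed.

Lemma sumR_scal n c f : sumR n (fun l => c * f l) = c * sumR n f.
Proof. induction n; simpl; [lra | rewrite IHn; lra]. Qed.

Lemma sumR_zero n f : (forall l, (l < n)%nat -> f l = 0) -> sumR n f = 0.
Proof.
  induction n as [|n IH]; simpl; intros H; auto.
  rewrite IH, H; try lra; try lia. intros; apply H; lia.
Qed.

Lemma sumR_le n f g : (forall l, (l < n)%nat -> f l <= g l) -> sumR n f <= sumR n g.
Proof.
  induction n as [|n IH]; simpl; intros H; [lra |].
  assert (f n <= g n) by (apply H; lia).
  assert (sumR n f <= sumR n g) by (apply IH; intros; apply H; lia). lra.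
Qed.

Lemma sumR_nonneg n f : (forall l, (l < n)%nat -> 0 <= f l) -> 0 <= sumR n f.
Proof. intros H. rewrite <- (sumR_zero n (fun _ => 0)) by auto. apply sumR_le; auto. Qed.

Lemma sumR_abs n f : Rabs (sumR n f) <= sumR n (fun l => Rabs (f l)).
Proof.
  induction n; simpl; [rewrite Rabs_R0; lra |].
  eapply Rle_trans; [apply Rabs_triang | lra].
Qed.

Lemma sumR_swap n m F :
  sumR n (fun l => sumR m (fun r => F l r)) = sumR m (fun r => sumR n (fun l => F l r)).
Proof.
  induction n; simpl; [rewrite sumR_zero; auto |].
  rewrite IHn, <- sumR_plus. reflexivity.
Qed.

Lemma sumR_split n m f : sumR (n + m) f = sumR n f + sumR m (fun l => f (n + l)%nat).
Proof.
  induction m; simpl; [rewrite Nat.add_0_r; lra |].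
  rewrite Nat.add_succ_r; simpl. rewrite IHm; lra.
Qed.

Lemma sumR_single n i c f : (i < n)%nat ->
  (forall l, (l < n)%nat -> l <> i -> f l = 0) -> f i = c -> sumR n f = c.
Proof.
  induction n as [|n IH]; intros Hi H Hc; [lia |]. simpl.
  destruct (Nat.eq_dec i n) as [->|Hne].
  - rewrite sumR_zero; [lra |]. intros; apply H; lia.
  - rewrite IH, H; auto; lra || lia.
Qed.

Lemma sumR_const n c : sumR n (fun _ => c) = INR n * c.
Proof. induction n; simpl sumR; [simpl; lra | rewrite IHn, S_INR; lra]. Qed.

Lemma sumR_f_R0 f n : sum_f_R0 f n = sumR (S n) f.
Proof. induction n; simpl; [lra | rewrite IHn; simpl; lra]. Qed.

Lemma sumR_nonneg_zero n f : (forall l, (l < n)%nat -> 0 <= f l) -> sumR n f = 0 ->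
  forall l, (l < n)%nat -> f l = 0.
Proof.
  induction n as [|n IH]; intros H Hs l Hl; [lia |]. simpl in Hs.
  assert (0 <= sumR n f) by (apply sumR_nonneg; intros; apply H; lia).
  assert (0 <= f n) by (apply H; lia).
  destruct (Nat.eq_dec l n) as [->|]; [lra |].
  apply IH; [intros; apply H; lia | lra | lia].
Qed.

(** * Quadratic forms and the Loewner order *)

Definition bil (p : nat) (A : Mat) (u w : nat -> R) : R :=
  sumR p (fun i => sumR p (fun j => u i * A i j * w j)).

Definition ev (i : nat) : nat -> R := fun l => if Nat.eqb l i then 1 else 0.

Lemma bil_ev p A i j : (i < p)%nat -> (j < p)%nat -> bil p A (ev i) (ev j) = A i j.
Proof.
  intros Hi Hj. unfold bil. apply sumR_single with i; auto.
  - intros l Hl Hne. apply sumR_zero. intros. unfold ev.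
    rewrite (proj2 (Nat.eqb_neq l i) Hne). lra.
  - apply sumR_single with j; auto.
    + intros l Hl Hne. unfold ev. rewrite (proj2 (Nat.eqb_neq l j) Hne). lra.
    + unfold ev. rewrite !Nat.eqb_refl. lra.
Qed.

Lemma bil_lin_l p A a b u u' w :
  bil p A (fun l => a * u l + b * u' l) w = a * bil p A u w + b * bil p A u' w.
Proof.
  unfold bil. rewrite <- !sumR_scal, <- sumR_plus. apply sumR_ext; intros.
  rewrite <- !sumR_scal, <- sumR_plus. apply sumR_ext; intros. ring.
Qed.

Lemma bil_lin_r p A a b u w w' :
  bil p A u (fun l => a * w l + b * w' l) = a * bil p A u w + b * bil p A u w'.
Proof.
  unfold bil. rewrite <- !sumR_scal, <- sumR_plus. apply sumR_ext; intros.
  rewrite <- !sumR_scal, <- sumR_plus. apply sumR_ext; intros. ring.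
Qed.

Lemma qform_two p A i j a b : (i < p)%nat -> (j < p)%nat ->
  qform p A (fun l => a * ev i l + b * ev j l)
  = a * a * A i i + a * b * (A i j + A j i) + b * b * A j j.
Proof.
  intros. change (qform p A ?v) with (bil p A v v).
  rewrite bil_lin_l, !bil_lin_r, !bil_ev; auto. ring.
Qed.

Lemma qform_ev p A i : (i < p)%nat -> qform p A (ev i) = A i i.
Proof. intros. change (qform p A ?v) with (bil p A v v). rewrite bil_ev; auto. Qed.

Lemma psd_diag p A i : psd p A -> (i < p)%nat -> 0 <= A i i.
Proof. intros [_ H] Hi. rewrite <- (qform_ev p A i Hi); auto. Qed.

Lemma psd_entry p A i j : psd p A -> (i < p)%nat -> (j < p)%nat ->
  Rabs (A i j) <= (A i i + A j j) / 2.
Proof.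
  intros [Hs H] Hi Hj.
  pose proof (H (fun l => 1 * ev i l + 1 * ev j l)) as H1.
  pose proof (H (fun l => 1 * ev i l + (-1) * ev j l)) as H2.
  rewrite qform_two in H1, H2 by auto. rewrite (Hs j i) in H1, H2 by auto.
  apply Rabs_le; lra.
Qed.

Lemma qform_lin p A B a b v :
  qform p (fun i j => a * A i j + b * B i j) v = a * qform p A v + b * qform p B v.
Proof.
  unfold qform. rewrite <- !sumR_scal, <- sumR_plus. apply sumR_ext; intros.
  rewrite <- !sumR_scal, <- sumR_plus. apply sumR_ext; intros. ring.
Qed.

Lemma qform_meq p A B v : meq p A B -> qform p A v = qform p B v.
Proof. intros H. unfold qform. apply sumR_ext; intros. apply sumR_ext; intros. rewrite H; auto. Qed.

Lemma qform_msub p A B v : qform p (msub A B) v = qform p A v - qform p B v.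
Proof.
  replace (qform p A v - qform p B v) with (1 * qform p A v + (-1) * qform p B v) by ring.
  rewrite <- qform_lin. apply qform_meq. intros i j _ _; unfold msub; ring.
Qed.

Lemma pd_nonneg p A v : pd p A -> 0 <= qform p A v.
Proof.
  intros [_ H]. destruct (classic (exists i, (i < p)%nat /\ v i <> 0)) as [E|E].
  - left; apply H; auto.
  - right. symmetry. unfold qform. apply sumR_zero; intros i Hi. apply sumR_zero; intros.
    replace (v i) with 0; [ring |]. apply NNPP; intro; apply E; eauto.
Qed.

Lemma pd_zero p A v : pd p A -> qform p A v = 0 -> forall i, (i < p)%nat -> v i = 0.
Proof.
  intros [_ H] Hq i Hi. apply NNPP; intro Hn.
  assert (0 < qform p A v) by (apply H; eauto). lra.
Qed.

Lemma pd_scal p k S : pd p S -> 0 < k -> pd p (fun i j => k * S i j).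
Proof.
  intros [Hs H] Hk. split; [intros i j Hi Hj; rewrite Hs; auto |].
  intros v Hv. rewrite (qform_meq p _ (fun i j => k * S i j + 0 * S i j) v)
    by (intros i j _ _; ring).
  rewrite qform_lin. specialize (H v Hv). nra.
Qed.

Lemma qform_inj p A B : msym p A -> msym p B ->
  (forall v, qform p A v = qform p B v) -> meq p A B.
Proof.
  intros HA HB H i j Hi Hj.
  assert (Hq : forall v, qform p (msub A B) v = 0) by (intros v; rewrite qform_msub, H; ring).
  pose proof (Hq (fun l => 1 * ev i l + 1 * ev j l)) as H1.
  rewrite qform_two in H1 by auto. pose proof (Hq (ev i)) as H2. pose proof (Hq (ev j)) as H3.
  rewrite qform_ev in H2, H3 by auto. unfold msub in *.
  rewrite (HA j i), (HB j i) in H1 by auto. lra.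
Qed.

Lemma loewner_qform p A B : loewner_le p A B -> forall v, qform p A v <= qform p B v.
Proof. intros [_ H] v. specialize (H v). rewrite qform_msub in H. lra. Qed.

Lemma meq_refl p A : meq p A A.
Proof. intros i j _ _; auto. Qed.

Lemma meq_sym p A B : meq p A B -> meq p B A.
Proof. intros H i j Hi Hj; symmetry; auto. Qed.

Lemma meq_trans p A B C : meq p A B -> meq p B C -> meq p A C.
Proof. intros H1 H2 i j Hi Hj; rewrite H1; auto. Qed.

Lemma mmul_meq p A A' B B' : meq p A A' -> meq p B B' -> meq p (mmul p A B) (mmul p A' B').
Proof. intros H1 H2 i j Hi Hj. unfold mmul. apply sumR_ext; intros. rewrite H1, H2; auto. Qed.

Lemma mmul_assoc p A B C : meq p (mmul p A (mmul p B C)) (mmul p (mmul p A B) C).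
Proof.
  intros i j _ _. unfold mmul.
  transitivity (sumR p (fun l => sumR p (fun r => A i l * B l r * C r j))).
  - apply sumR_ext; intros. rewrite <- sumR_scal. apply sumR_ext; intros. ring.
  - rewrite sumR_swap. apply sumR_ext; intros.
    rewrite Rmult_comm, <- sumR_scal. apply sumR_ext; intros. ring.
Qed.

Lemma mmul_idl p A : meq p (mmul p idm A) A.
Proof.
  intros i j Hi Hj. unfold mmul. apply sumR_single with i; auto.
  - intros l _ Hne. unfold idm. rewrite (proj2 (Nat.eqb_neq i l)) by auto. ring.
  - unfold idm. rewrite Nat.eqb_refl. ring.
Qed.

Lemma mmul_idr p A : meq p (mmul p A idm) A.
Proof.
  intros i j Hi Hj. unfold mmul. apply sumR_single with j; auto.
  - intros l _ Hne. unfold idm. rewrite (proj2 (Nat.eqb_neq l j)) by auto. ring.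
  - unfold idm. rewrite Nat.eqb_refl. ring.
Qed.

Lemma mmul3_scal p a b c A B C i j :
  mmul p (fun i j => a * A i j) (mmul p (fun i j => b * B i j) (fun i j => c * C i j)) i j
  = a * b * c * mmul p A (mmul p B C) i j.
Proof.
  unfold mmul. rewrite <- sumR_scal. apply sumR_ext; intros l _.
  rewrite (sumR_ext p _ (fun m => (b * c) * (B l m * C m j))) by (intros; ring).
  rewrite sumR_scal. ring.
Qed.

Definition trm (A : Mat) : Mat := fun i j => A j i.

Lemma trm_mmul p A B : meq p (trm (mmul p A B)) (mmul p (trm B) (trm A)).
Proof. intros i j _ _. unfold trm, mmul. apply sumR_ext; intros; ring. Qed.

Lemma trm_sym p A : msym p A -> meq p (trm A) A.
Proof. intros H i j Hi Hj. apply H; auto. Qed.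

(* Transposing S S D = I for symmetric S, D gives the right-hand version. *)
Lemma sqrt_inv_right p S D : msym p S -> msym p D ->
  meq p (mmul p S (mmul p S D)) idm -> meq p (mmul p D (mmul p S S)) idm.
Proof.
  intros HS HD H.
  assert (Htr : meq p (trm (mmul p S (mmul p S D))) (mmul p (mmul p D S) S)).
  { eapply meq_trans; [apply trm_mmul | apply mmul_meq; [| apply trm_sym; auto]].
    eapply meq_trans; [apply trm_mmul | apply mmul_meq; apply trm_sym; auto]. }
  intros i j Hi Hj. rewrite (mmul_assoc p D S S i j Hi Hj), <- Htr by auto.
  unfold trm. rewrite H by auto. unfold idm. rewrite Nat.eqb_sym. reflexivity.
Qed.

Lemma sqrt_inv_sandwich p S D : msym p S -> msym p D ->
  meq p (mmul p S (mmul p S D)) idm -> meq p (mmul p S (mmul p D S)) idm.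
Proof.
  intros HS HD H.
  assert (HL : meq p (mmul p (mmul p D S) S) idm).
  { eapply meq_trans; [apply meq_sym, mmul_assoc | apply sqrt_inv_right; auto]. }
  assert (Comm : meq p (mmul p D S) (mmul p S D)).
  { eapply meq_trans; [apply meq_sym, mmul_idr |].
    eapply meq_trans; [apply mmul_meq; [apply meq_refl | apply meq_sym, H] |].
    eapply meq_trans; [apply mmul_assoc |].
    eapply meq_trans; [apply mmul_meq; [apply HL | apply meq_refl] | apply mmul_idl]. }
  eapply meq_trans; [apply mmul_meq; [apply meq_refl | apply Comm] | exact H].
Qed.

(* Positive definite matrices with the same square are equal: for
   X = S1 - S2 one has sum_i <X_i, S1 X_i> + <X_i, S2 X_i> = tr(X (S1^2 - S2^2)) = 0. *)
Lemma pd_square_inj p S1 S2 : pd p S1 -> pd p S2 ->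
  meq p (mmul p S1 S1) (mmul p S2 S2) -> meq p S1 S2.
Proof.
  intros H1 H2 Q. destruct H1 as [HS1 P1'], H2 as [HS2 P2'].
  set (X := fun i j => S1 i j - S2 i j).
  assert (HX : msym p X) by (intros i j Hi Hj; unfold X; rewrite HS1, HS2; auto).
  set (q1 := fun i => qform p S1 (fun l => X i l)).
  set (q2 := fun i => qform p S2 (fun l => X i l)).
  assert (Z : sumR p q1 + sumR p q2 = 0).
  { transitivity (sumR p (fun i => sumR p (fun l => sumR p (fun m =>
        X i l * (S1 l m * S1 m i - S2 l m * S2 m i))))).
    2: { apply sumR_zero; intros i Hi. apply sumR_zero; intros l Hl.
         rewrite sumR_scal, sumR_minus. specialize (Q l i Hl Hi). unfold mmul in Q.
         rewrite Q. ring. }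
    transitivity (sumR p (fun i => sumR p (fun l => sumR p (fun m => X i l * S1 l m * X m i)))
       + sumR p (fun i => sumR p (fun l => sumR p (fun m => X i l * X l m * S2 m i)))).
    2: { rewrite <- sumR_plus. apply sumR_ext; intros i Hi. rewrite <- sumR_plus.
         apply sumR_ext; intros l Hl. rewrite <- sumR_plus. apply sumR_ext; intros m Hm.
         unfold X. ring. }
    f_equal.
    - apply sumR_ext; intros i Hi. unfold q1, qform. apply sumR_ext; intros l Hl.
      apply sumR_ext; intros m Hm. rewrite (HX m i); auto.
    - rewrite (sumR_swap p p (fun i l => sumR p (fun m => X i l * X l m * S2 m i))).
      apply sumR_ext; intros l Hl. unfold q2, qform.
      rewrite (sumR_swap p p (fun i m => X i l * X l m * S2 m i)).
      apply sumR_ext; intros m Hm. apply sumR_ext; intros i Hi. rewrite (HX l i); auto. ring. }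
  assert (N1 : forall i, (i < p)%nat -> 0 <= q1 i) by (intros; apply pd_nonneg; split; auto).
  assert (N2 : forall i, (i < p)%nat -> 0 <= q2 i) by (intros; apply pd_nonneg; split; auto).
  assert (0 <= sumR p q1) by (apply sumR_nonneg; auto).
  assert (0 <= sumR p q2) by (apply sumR_nonneg; auto).
  intros i j Hi Hj. assert (E : q1 i = 0) by (apply (sumR_nonneg_zero p q1); auto; lra).
  pose proof (pd_zero p S1 (fun l => X i l) (conj HS1 P1') E j Hj). unfold X in *. lra.
Qed.

Lemma pd_inv_sqrt_unique p S1 S2 D : pd p S1 -> pd p S2 -> msym p D ->
  meq p (mmul p S1 (mmul p S1 D)) idm -> meq p (mmul p S2 (mmul p S2 D)) idm -> meq p S1 S2.
Proof.
  intros P1 P2 HD E1 E2. apply pd_square_inj; auto.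
  pose proof (sqrt_inv_right p S2 D (proj1 P2) HD E2) as E2'.
  eapply meq_trans; [apply meq_sym, mmul_idr |].
  eapply meq_trans; [apply mmul_meq; [apply meq_refl | apply meq_sym, E2'] |].
  eapply meq_trans; [apply mmul_assoc |].
  eapply meq_trans; [apply mmul_meq; [| apply meq_refl] | apply mmul_idl].
  eapply meq_trans; [apply meq_sym, mmul_assoc | exact E1].
Qed.

Lemma canonical_formula_scale p S1 S2 D1 D2 N1 N2 U V c :
  pd p S1 -> pd p S2 -> msym p D1 -> 0 < c ->
  meq p (mmul p S1 (mmul p S1 D1)) idm -> meq p (mmul p S2 (mmul p S2 D2)) idm ->
  meq p D2 (fun i j => c * D1 i j) -> meq p N2 (fun i j => c * N1 i j) ->
  meq p U (mmul p S1 (mmul p N1 S1)) -> meq p V (mmul p S2 (mmul p N2 S2)) -> meq p V U.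
Proof.
  intros P1 P2 HD Hc E1 E2 ED EN EU EV.
  set (k := / sqrt c). assert (Hk : 0 < k) by (apply Rinv_0_lt_compat, sqrt_lt_R0; auto).
  assert (Hkk : k * k * c = 1) by (unfold k; rewrite <- Rinv_mult, sqrt_sqrt by lra; field; lra).
  set (S' := fun i j => k * S1 i j).
  assert (HS' : meq p (mmul p S' (mmul p S' D2)) idm).
  { intros i j Hi Hj.
    rewrite (mmul_meq p S' S' (mmul p S' D2) (mmul p S' (fun i j => c * D1 i j))); auto.
    - unfold S'. rewrite mmul3_scal, Hkk, Rmult_1_l. apply E1; auto.
    - apply meq_refl.
    - apply mmul_meq; auto. apply meq_refl. }
  assert (E : meq p S2 S').
  { apply (pd_inv_sqrt_unique p S2 S' D2); auto.
    - apply pd_scal; auto.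
    - intros i j Hi Hj; rewrite ED, (ED j i), HD; auto. }
  intros i j Hi Hj. rewrite EV, EU; auto.
  rewrite (mmul_meq p S2 S' (mmul p N2 S2) (mmul p (fun i j => c * N1 i j) S')); auto.
  - unfold S'. rewrite mmul3_scal. replace (k * c * k) with (k * k * c) by ring.
    rewrite Hkk; ring.
  - apply mmul_meq; auto.
Qed.

Lemma canonical_formula_half p S D N U : pd p S -> msym p D ->
  meq p (mmul p S (mmul p S D)) idm -> meq p N (fun i j => / 2 * D i j) ->
  meq p U (mmul p S (mmul p N S)) -> meq p U half_idm.
Proof.
  intros PS HD E EN EU i j Hi Hj. rewrite EU by auto.
  transitivity (/ 2 * mmul p S (mmul p D S) i j).
  - rewrite (mmul_meq p S S (mmul p N S) (mmul p (fun a b => / 2 * D a b) S)); auto;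
      [| apply meq_refl | apply mmul_meq; [exact EN | apply meq_refl]].
    unfold mmul. rewrite <- sumR_scal. apply sumR_ext; intros l _.
    rewrite (sumR_ext p _ (fun m => / 2 * (D l m * S m j))) by (intros; ring).
    rewrite sumR_scal. ring.
  - rewrite (sqrt_inv_sandwich p S D (proj1 PS) HD E i j Hi Hj). reflexivity.
Qed.

(** * Borel sets *)

Lemma borel_or A B : borel A -> borel B -> borel (fun x => A x \/ B x).
Proof.
  intros HA HB.
  apply borel_ext with (fun x => exists n : nat, (match n with O => A | S _ => B end) x).
  - apply borel_cunion. intros [|n]; auto.
  - intros x; split; [intros [[|n] H]; auto |].
    intros [H|H]; [exists O | exists 1%nat]; auto.
Qed.

Lemma borel_empty : borel (fun _ => False).
Proof.
  apply borel_ext with (fun x => ~ (x <= 0 \/ ~ x <= 0)).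
  - constructor. apply borel_or; repeat constructor.
  - intros x; split; [| tauto]. intros H; apply H, classic.
Qed.

Lemma borel_and A B : borel A -> borel B -> borel (fun x => A x /\ B x).
Proof.
  intros HA HB. apply borel_ext with (fun x => ~ (~ A x \/ ~ B x)).
  - constructor; apply borel_or; constructor; auto.
  - intros x; split; [intros H; split; apply NNPP; tauto | tauto].
Qed.

Lemma borel_gt c : borel (fun x => c < x).
Proof. apply borel_ext with (fun x => ~ x <= c); [repeat constructor | intros; lra]. Qed.

Lemma borel_lt c : borel (fun x => x < c).
Proof.
  apply borel_ext with (fun x => exists n : nat, x <= c - / (INR n + 1)).
  - apply borel_cunion; intros; constructor.
  - intros x; split.
    + intros [n H].
      assert (0 < / (INR n + 1)) by (apply Rinv_0_lt_compat; pose proof (pos_INR n); lra). lra.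
    + intros H. destruct (archimed_cor1 (c - x)) as [N [H1 H2]]; [lra |]. exists N.
      assert (0 < INR N) by (apply lt_0_INR; auto).
      assert (/ (INR N + 1) < / INR N) by (apply Rinv_lt_contravar; nra). lra.
Qed.

Lemma borel_ge c : borel (fun x => c <= x).
Proof. apply borel_ext with (fun x => ~ x < c); [constructor; apply borel_lt | intros; lra]. Qed.

Lemma borel_cc u v : borel (fun x => u <= x <= v).
Proof. apply borel_and; [apply borel_ge | constructor]. Qed.

Lemma borel_preimage (phi : R -> R) : (forall c, borel (fun x => phi x <= c)) ->
  forall B, borel B -> borel (fun x => B (phi x)).
Proof.
  intros Hphi B HB. induction HB.
  - apply Hphi.
  - apply borel_compl; auto.
  - apply (borel_cunion (fun n x => A n (phi x))); auto.
  - apply borel_ext with (fun x => A (phi x)); [auto | intros; apply H].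
Qed.

Lemma borel_cell (x : nat -> R) l : borel (cell x l).
Proof.
  unfold cell. destruct l as [|l].
  - apply borel_ext with (fun t => x O <= t /\ t <= x 1%nat); [apply borel_cc |].
    intros t; split; [intros [H1 H2]; split; auto |].
    intros [[[_ H]|[H _]] H2]; auto; lia.
  - apply borel_ext with (fun t => x (S l) < t /\ t <= x (S (S l))).
    + apply borel_and; [apply borel_gt | constructor].
    + intros t; split; [intros [H1 H2]; split; auto; right; split; auto; lia |].
      intros [[[H _]|[_ H]] H2]; auto; discriminate.
Qed.

Lemma affine_borel s c0 : s <> 0 -> forall c, borel (fun x => s * x + c0 <= c).
Proof.
  intros Hs c. set (q := (c - c0) / s). assert (Hq : s * q = c - c0) by (unfold q; field; auto).
  destruct (Rlt_dec 0 s).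
  - apply borel_ext with (fun x => x <= q); [constructor | intros x; split; intros; nra].
  - apply borel_ext with (fun x => q <= x); [apply borel_ge | intros x; split; intros; nra].
Qed.

(** * Elementary properties of matrix measures *)

Section MatrixMeasure.
Variables (p : nat) (al be : R) (mu : mmeasure).
Hypothesis Hmu : is_matrix_measure p al be mu.

Lemma mm_psd B : borel B -> psd p (mu B).
Proof. apply Hmu. Qed.

(* Countable additivity applied to the empty family: mu(empty) = 0. *)
Lemma mm_empty i j : (i < p)%nat -> (j < p)%nat -> mu (fun _ => False) i j = 0.
Proof.
  intros Hi Hj. destruct Hmu as [_ [Hadd _]].
  assert (Hc : forall x : R, False <-> exists n : nat, False) by (intros; split; [tauto | intros [_ []]]).
  pose proof (Hadd (fun _ _ => False) (fun _ => False) (fun _ => borel_empty)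
    (fun n m x _ H _ => H) borel_empty Hc i j Hi Hj) as H.
  set (c := mu (fun _ => False) i j) in *.
  destruct (Req_dec c 0) as [E|E]; auto. exfalso.
  assert (Ha : 0 < Rabs c / 2) by (pose proof (Rabs_pos_lt c E); lra).
  destruct (H _ Ha) as [N HN]. specialize (HN (S N) ltac:(lia)). unfold Rdist in HN.
  rewrite sumR_const in HN. change (mu (fun _ : R => False) i j) with c in HN.
  replace (INR (S (S N)) * c - c) with (INR (S N) * c) in HN by (rewrite (S_INR (S N)); ring).
  rewrite Rabs_mult, Rabs_right in HN; [| apply Rle_ge, pos_INR].
  assert (1 <= INR (S N)) by (rewrite S_INR; pose proof (pos_INR N); lra).
  pose proof (Rabs_pos c). nra.
Qed.

Lemma mm_fin n (A : nat -> R -> Prop) C : (forall l, (l < n)%nat -> borel (A l)) ->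
  (forall l r x, (l < n)%nat -> (r < n)%nat -> l <> r -> A l x -> A r x -> False) ->
  borel C -> (forall x, C x <-> exists l, (l < n)%nat /\ A l x) ->
  forall i j, (i < p)%nat -> (j < p)%nat -> mu C i j = sumR n (fun l => mu (A l) i j).
Proof.
  intros HA Hd HC HCx i j Hi Hj. pose proof Hmu as [_ [Hadd _]].
  set (F := fun l => if Nat.ltb l n then A l else fun _ : R => False).
  assert (HF : forall l, borel (F l)).
  { intros l; unfold F; destruct (Nat.ltb l n) eqn:E;
      [apply HA; apply Nat.ltb_lt; auto | apply borel_empty]. }
  assert (HFd : forall l r x, l <> r -> F l x -> F r x -> False).
  { intros l r x Hlr. unfold F.
    destruct (Nat.ltb l n) eqn:E1; destruct (Nat.ltb r n) eqn:E2; try tauto.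
    apply Hd; auto; apply Nat.ltb_lt; auto. }
  assert (HCF : forall x, C x <-> exists l, F l x).
  { intros x; rewrite HCx; split.
    - intros [l [Hl H]]. exists l; unfold F; rewrite (proj2 (Nat.ltb_lt l n) Hl); auto.
    - intros [l H]. unfold F in H. destruct (Nat.ltb l n) eqn:E; [| contradiction].
      exists l; split; auto; apply Nat.ltb_lt; auto. }
  specialize (Hadd F C HF HFd HC HCF i j Hi Hj).
  apply UL_sequence with (1 := Hadd).
  intros eps He. exists n. intros N HN. unfold Rdist.
  replace (S N) with (n + (S N - n))%nat by lia. rewrite sumR_split.
  rewrite (sumR_zero (S N - n)).
  - rewrite Rplus_0_r, (sumR_ext n _ (fun l => mu (A l) i j)), Rminus_diag, Rabs_R0; auto.
    intros l Hl. unfold F. rewrite (proj2 (Nat.ltb_lt l n) Hl); auto.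
  - intros l _. unfold F. rewrite (proj2 (Nat.ltb_ge (n + l) n)) by lia. apply mm_empty; auto.
Qed.

Lemma mm_ext A B : borel A -> (forall x, A x <-> B x) ->
  forall i j, (i < p)%nat -> (j < p)%nat -> mu A i j = mu B i j.
Proof.
  intros HA HAB i j Hi Hj. rewrite (mm_fin 1 (fun _ => A) B); auto.
  - simpl; lra.
  - intros; lia.
  - apply borel_ext with A; auto.
  - intros x; rewrite <- HAB; split; [intros H; exists O; split; auto | intros [_ [_ H]]; auto].
Qed.

Lemma mm_conc C : borel C -> forall i j, (i < p)%nat -> (j < p)%nat ->
  mu C i j = mu (fun x => C x /\ al <= x <= be) i j.
Proof.
  intros HC i j Hi Hj.
  rewrite (mm_fin 2 (fun l => match l with O => fun x => C x /\ al <= x <= be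
                                      | _ => fun x => C x /\ ~ (al <= x <= be) end) C); auto.
  - simpl. destruct Hmu as [_ [_ [Hc _]]].
    rewrite (Hc (fun x => C x /\ ~ (al <= x <= be))); auto; [lra | |].
    + apply borel_and; auto. constructor; apply borel_cc.
    + intros x [_ H]. lra.
  - intros [|[|l]] Hl; try lia; apply borel_and; auto; [| constructor]; apply borel_cc.
  - intros [|[|l]] [|[|r]] x Hl Hr Hlr; simpl; try tauto; lia.
  - intros x; split.
    + intros H. destruct (classic (al <= x <= be)); [exists O | exists 1%nat]; split; auto; lia.
    + intros [[|[|l]] [Hl H]]; try tauto; lia.
Qed.

Definition dcover (n : nat) (A : nat -> R -> Prop) : Prop :=
  (forall l, (l < n)%nat -> borel (A l)) /\
  (forall t, al <= t <= be -> exists l, (l < n)%nat /\ A l t) /\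
  (forall t l r, al <= t <= be -> (l < n)%nat -> (r < n)%nat -> A l t -> A r t -> l = r).

Lemma mm_dcover_sub n A C : dcover n A -> borel C -> forall i j, (i < p)%nat -> (j < p)%nat ->
  mu C i j = sumR n (fun l => mu (fun x => C x /\ A l x) i j).
Proof.
  intros [HA [Hc Hd]] HC i j Hi Hj. rewrite mm_conc; auto.
  rewrite (mm_fin n (fun l x => (C x /\ A l x) /\ al <= x <= be)); auto.
  - apply sumR_ext; intros l Hl. symmetry; apply mm_conc; auto. apply borel_and; auto.
  - intros l Hl. apply borel_and; [apply borel_and; auto | apply borel_cc].
  - intros l r x Hl Hr Hlr [[_ H1] H3] [[_ H2] _]. apply Hlr; eapply Hd; eauto.
  - apply borel_and; auto; apply borel_cc.
  - intros x; split.
    + intros [H1 H2]. destruct (Hc x H2) as [l [Hl H]]. exists l; auto.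
    + intros [l [_ [[H1 _] H2]]]; auto.
Qed.

Lemma mm_dcover n A : dcover n A -> forall i j, (i < p)%nat -> (j < p)%nat ->
  sumR n (fun l => mu (A l) i j) = idm i j.
Proof.
  intros HD i j Hi Hj. destruct Hmu as [_ [_ [_ Hn]]]. rewrite <- Hn by auto.
  rewrite (mm_dcover_sub n A); auto; [| apply borel_cc].
  apply sumR_ext; intros l Hl. rewrite mm_conc; auto; [| apply HD; auto].
  apply mm_ext; auto; [apply borel_and; [apply HD; auto | apply borel_cc] | intros x; tauto].
Qed.

End MatrixMeasure.

(** * The Riemann-Stieltjes integral against a matrix measure *)

Definition ucont (al be : R) (f : R -> R) : Prop :=
  forall eps, 0 < eps -> exists d, 0 < d /\ forall s t, al <= s <= be -> al <= t <= be ->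
    Rabs (s - t) <= d -> Rabs (f s - f t) <= eps.

Definition gpart (al be d : R) (n : nat) (A : nat -> R -> Prop) (tau : nat -> R) : Prop :=
  dcover al be n A /\ (forall l, (l < n)%nat -> al <= tau l <= be) /\
  (forall l t, (l < n)%nat -> al <= t <= be -> A l t -> Rabs (t - tau l) <= d).

Definition gsum (p : nat) (mu : mmeasure) (n : nat) (A : nat -> R -> Prop) (c : nat -> R)
  (i j : nat) : R := sumR n (fun l => c l * mu (A l) i j).

Definition spart (al be d : R) (n : nat) (x xi : nat -> R) : Prop :=
  (0 < n)%nat /\ x O = al /\ x n = be /\
  forall l, (l < n)%nat -> x l < x (S l) /\ x (S l) - x l < d /\ x l <= xi l <= x (S l).

Lemma int_spart p mu a b f M : is_integral p mu a b f M <->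
  forall eps, 0 < eps -> exists d, 0 < d /\ forall n x xi, spart a b d n x xi ->
    forall i j, (i < p)%nat -> (j < p)%nat ->
      Rabs (gsum p mu n (cell x) (fun l => f (xi l)) i j - M i j) < eps.
Proof.
  split; intros H eps He; destruct (H eps He) as [d [Hd H']]; exists d; split; auto.
  - intros n x xi [H1 [H2 [H3 H4]]]. apply H'; auto.
  - intros n x xi H1 H2 H3 H4. apply H'. repeat split; auto; apply H4; auto.
Qed.

Section GeneralisedSums.
Variables (p : nat) (al be : R) (mu : mmeasure).
Hypothesis Hmu : is_matrix_measure p al be mu.

(* |k mu(E)_ij| <= eps (mu(E)_ii + mu(E)_jj)/2 when |k| <= eps wherever E
   meets [al,be]; this is what turns entrywise estimates into total-mass ones. *)
Lemma entry_weight_bound E k eps i j : borel E -> 0 <= eps -> (i < p)%nat -> (j < p)%nat ->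
  ((exists t, al <= t <= be /\ E t) -> Rabs k <= eps) ->
  Rabs (k * mu E i j) <= eps * ((mu E i i + mu E j j) / 2).
Proof.
  intros HE He Hi Hj Hk.
  pose proof (mm_psd p al be mu Hmu E HE) as HP.
  assert (Hii := psd_diag p (mu E) i HP Hi). assert (Hjj := psd_diag p (mu E) j HP Hj).
  destruct (classic (exists t, al <= t <= be /\ E t)) as [Ex|NEx].
  - rewrite Rabs_mult. specialize (Hk Ex). pose proof (psd_entry p (mu E) i j HP Hi Hj).
    apply Rmult_le_compat; auto; apply Rabs_pos.
  - rewrite (mm_conc p al be mu Hmu E HE i j Hi Hj).
    rewrite (mm_ext p al be mu Hmu _ (fun _ => False)), mm_empty with (1 := Hmu); auto.
    + rewrite Rmult_0_r, Rabs_R0. apply Rmult_le_pos; lra.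
    + apply borel_and; auto; apply borel_cc.
    + intros x; split; [| tauto]. intros [H1 H2]; apply NEx; eauto.
Qed.

Lemma gsum_coef_close n A c c' eta i j : dcover al be n A -> (i < p)%nat -> (j < p)%nat ->
  0 <= eta ->
  (forall l, (l < n)%nat -> (exists t, al <= t <= be /\ A l t) -> Rabs (c l - c' l) <= eta) ->
  Rabs (gsum p mu n A c i j - gsum p mu n A c' i j) <= eta.
Proof.
  intros HD Hi Hj He H. unfold gsum. rewrite <- sumR_minus.
  eapply Rle_trans; [apply sumR_abs |].
  eapply Rle_trans.
  - apply sumR_le with (g := fun l => eta * ((mu (A l) i i + mu (A l) j j) / 2)).
    intros l Hl. rewrite <- Rmult_minus_distr_r.
    apply entry_weight_bound; auto. apply HD; auto.
  - right. rewrite (sumR_ext n _ (fun l => eta / 2 * mu (A l) i i + eta / 2 * mu (A l) j j))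
      by (intros; field).
    rewrite sumR_plus, !sumR_scal, !(mm_dcover p al be mu Hmu n A HD); auto.
    unfold idm. rewrite !Nat.eqb_refl. field.
Qed.

(* Two generalised sums of f of mesh d are within eps when f oscillates by at
   most eps on scale 2d: compare both with the sum over the common refinement. *)
Lemma gsum_close d n A tau m B eta f eps i j :
  gpart al be d n A tau -> gpart al be d m B eta -> 0 <= eps ->
  (forall s t, al <= s <= be -> al <= t <= be -> Rabs (s - t) <= 2 * d ->
     Rabs (f s - f t) <= eps) -> (i < p)%nat -> (j < p)%nat ->
  Rabs (gsum p mu n A (fun l => f (tau l)) i j - gsum p mu m B (fun r => f (eta r)) i j) <= eps.
Proof.
  intros [HA [HtA HfA]] [HB [HtB HfB]] He Hf Hi Hj. unfold gsum.
  set (E := fun l r x => A l x /\ B r x).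
  assert (HE : forall l r, (l < n)%nat -> (r < m)%nat -> borel (E l r))
    by (intros; apply borel_and; [apply HA | apply HB]; auto).
  assert (RefA : forall l k k', (l < n)%nat -> (k < p)%nat -> (k' < p)%nat ->
            mu (A l) k k' = sumR m (fun r => mu (E l r) k k')).
  { intros l k k' Hl Hk Hk'. apply (mm_dcover_sub p al be mu Hmu m B (A l) HB); auto.
    apply HA; auto. }
  assert (RefB : forall r, (r < m)%nat ->
            mu (B r) i j = sumR n (fun l => mu (E l r) i j)).
  { intros r Hr. rewrite (mm_dcover_sub p al be mu Hmu n A (B r) HA); auto; [| apply HB; auto].
    apply sumR_ext; intros l Hl. apply mm_ext with (1 := Hmu); auto.
    - apply borel_and; [apply HB | apply HA]; auto.
    - intros x; unfold E; tauto. }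
  assert (Mass : forall k, (k < p)%nat -> sumR n (fun l => sumR m (fun r => mu (E l r) k k)) = 1).
  { intros k Hk. rewrite <- (sumR_ext n (fun l => mu (A l) k k)) by (intros; apply RefA; auto).
    rewrite (mm_dcover p al be mu Hmu n A HA); auto. unfold idm; rewrite Nat.eqb_refl; auto. }
  rewrite (sumR_ext n _ (fun l => sumR m (fun r => f (tau l) * mu (E l r) i j)))
    by (intros l Hl; rewrite RefA, sumR_scal by auto; reflexivity).
  rewrite (sumR_ext m _ (fun r => sumR n (fun l => f (eta r) * mu (E l r) i j)))
    by (intros r Hr; rewrite RefB, sumR_scal by auto; reflexivity).
  rewrite (sumR_swap m n), <- sumR_minus.
  eapply Rle_trans; [apply sumR_abs |].
  eapply Rle_trans.
  - apply sumR_le with (g := fun l => sumR m (fun r => eps * ((mu (E l r) i i + mu (E l r) j j) / 2))).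
    intros l Hl. rewrite <- sumR_minus. eapply Rle_trans; [apply sumR_abs |].
    apply sumR_le. intros r Hr. rewrite <- Rmult_minus_distr_r.
    apply entry_weight_bound; auto. intros [t [Ht [H1 H2]]]. apply Hf; auto.
    pose proof (HfA l t Hl Ht H1). pose proof (HfB r t Hr Ht H2).
    replace (tau l - eta r) with ((t - eta r) - (t - tau l)) by ring.
    eapply Rle_trans; [apply Rabs_triang | rewrite Rabs_Ropp; lra].
  - right. rewrite (sumR_ext n _ (fun l => eps / 2 * sumR m (fun r => mu (E l r) i i)
                                          + eps / 2 * sumR m (fun r => mu (E l r) j j))).
    + rewrite sumR_plus, !sumR_scal, !Mass; auto. field.
    + intros l Hl. rewrite <- !sumR_scal, <- sumR_plus. apply sumR_ext; intros; field.
Qed.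

End GeneralisedSums.

Lemma spart_mono al be d n x xi : spart al be d n x xi ->
  forall l m, (l <= m <= n)%nat -> x l <= x m.
Proof.
  intros [_ [_ [_ H]]] l m [H1 H2]. induction m as [|m IH]; [replace l with O by lia; lra |].
  destruct (Nat.eq_dec l (S m)) as [->|]; [lra |].
  assert (x m < x (S m)) by (apply H; lia). assert (x l <= x m) by (apply IH; lia). lra.
Qed.

Lemma spart_weaken al be d d' n x xi : spart al be d n x xi -> d <= d' -> spart al be d' n x xi.
Proof.
  intros [H1 [H2 [H3 H4]]] Hd. repeat split; auto; try apply H4; auto.
  destruct (H4 l H) as [_ [H5 _]]; lra.
Qed.

Lemma spart_gpart al be d n x xi : spart al be d n x xi -> gpart al be d n (cell x) xi.
Proof.
  intros HS. pose proof (spart_mono _ _ _ _ _ _ HS) as Hm. destruct HS as [Hn [H0 [Hend H]]].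
  split; [split; [| split] | split].
  - intros; apply borel_cell.
  - intros t Ht.
    assert (K : forall m, (1 <= m <= n)%nat -> t <= x m -> exists l, (l < m)%nat /\ cell x l t).
    { intros m. induction m as [|m IH]; intros Hm1 Htm; [lia |].
      destruct (Nat.eq_dec m O) as [->|].
      - exists O; split; [lia |]. unfold cell; split; [left; split; auto; lra | auto].
      - destruct (Rle_dec t (x m)).
        + destruct IH as [l [Hl Hc]]; auto; try lia. exists l; split; auto.
        + exists m; split; auto. unfold cell; split; auto. right; split; lia || lra. }
    destruct (K n ltac:(lia) ltac:(lra)) as [l [Hl Hc]]. exists l; auto.
  - intros t l r Ht Hl Hr [C1 C2] [D1 D2].
    destruct (Nat.lt_trichotomy l r) as [E|[E|E]]; auto; exfalso.
    + destruct D1 as [[D1 _]|[_ D1]]; [lia |]. assert (x (S l) <= x r) by (apply Hm; lia). lra.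
    + destruct C1 as [[C1 _]|[_ C1]]; [lia |]. assert (x (S r) <= x l) by (apply Hm; lia). lra.
  - intros l Hl. destruct (H l Hl) as [_ [_ [A1 A2]]].
    assert (x O <= x l) by (apply Hm; lia). assert (x (S l) <= x n) by (apply Hm; lia). lra.
  - intros l t Hl Ht [C1 C2]. destruct (H l Hl) as [_ [A1 [A2 A3]]].
    assert (x l <= t) by (destruct C1 as [[E C]|[_ C]]; [subst; auto | lra]).
    apply Rabs_le; lra.
Qed.

Definition ux (al be : R) (N : nat) (l : nat) : R := al + INR l * ((be - al) / INR N).

Lemma ux_spart al be d N : al < be -> (0 < N)%nat -> (be - al) / INR N < d ->
  spart al be d N (ux al be N) (ux al be N).
Proof.
  intros Hab HN Hd. assert (0 < INR N) by (apply lt_0_INR; auto).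
  assert (0 < (be - al) / INR N) by (apply Rdiv_lt_0_compat; lra).
  unfold ux. repeat split; auto; try rewrite S_INR; try lra.
  - simpl; ring.
  - field; lra.
Qed.

Lemma uniform_mesh al be d : al < be -> 0 < d ->
  exists N0, forall N, (N >= N0)%nat -> (0 < N)%nat /\ (be - al) / INR N < d.
Proof.
  intros Hab Hd. destruct (archimed_cor1 (d / (be - al))) as [N0 [H1 H2]].
  { apply Rdiv_lt_0_compat; lra. }
  exists N0. intros N HN. split; [lia |].
  assert (0 < INR N0) by (apply lt_0_INR; auto).
  assert (INR N0 <= INR N) by (apply le_INR; auto).
  assert (/ INR N <= / INR N0) by (apply Rinv_le_contravar; lra).
  unfold Rdiv. apply Rle_lt_trans with ((be - al) * / INR N0); [apply Rmult_le_compat_l; lra |].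
  apply Rmult_lt_reg_l with (/ (be - al)); [apply Rinv_0_lt_compat; lra |].
  rewrite <- Rmult_assoc, Rinv_l by lra. unfold Rdiv in H1. lra.
Qed.

Lemma spart_exists al be d : al < be -> 0 < d -> exists N, spart al be d N (ux al be N) (ux al be N).
Proof.
  intros Hab Hd. destruct (uniform_mesh al be d Hab Hd) as [N HN].
  destruct (HN N (le_n N)). exists N. apply ux_spart; auto.
Qed.

Lemma small_zero x : (forall eps, 0 < eps -> Rabs x < eps) -> x = 0.
Proof.
  intros H. destruct (Req_dec x 0) as [|Hx]; auto. exfalso.
  pose proof (Rabs_pos_lt x Hx). specialize (H (Rabs x) H0). lra.
Qed.

Lemma int_unique p mu al be f M M' : al < be ->
  is_integral p mu al be f M -> is_integral p mu al be f M' -> meq p M M'.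
Proof.
  intros Hab H1 H2 i j Hi Hj. apply Rminus_diag_uniq, small_zero. intros eps He.
  destruct (proj1 (int_spart _ _ _ _ _ _) H1 (eps / 2) ltac:(lra)) as [d1 [Hd1 K1]].
  destruct (proj1 (int_spart _ _ _ _ _ _) H2 (eps / 2) ltac:(lra)) as [d2 [Hd2 K2]].
  destruct (spart_exists al be (Rmin d1 d2) Hab) as [N HS]; [apply Rmin_pos; auto |].
  specialize (K1 _ _ _ (spart_weaken _ _ _ d1 _ _ _ HS (Rmin_l _ _)) i j Hi Hj).
  specialize (K2 _ _ _ (spart_weaken _ _ _ d2 _ _ _ HS (Rmin_r _ _)) i j Hi Hj).
  set (s := gsum p mu N (cell (ux al be N)) (fun l => f (ux al be N l)) i j) in *.
  replace (M i j - M' i j) with ((s - M' i j) - (s - M i j)) by ring.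
  eapply Rle_lt_trans; [apply Rabs_triang | rewrite Rabs_Ropp; lra].
Qed.

Section Integral.
Variables (p : nat) (al be : R) (mu : mmeasure).
Hypothesis Hmu : is_matrix_measure p al be mu.
Hypothesis Hab : al < be.

Lemma gsum_approx f M : is_integral p mu al be f M -> ucont al be f ->
  forall eps, 0 < eps -> exists d, 0 < d /\ forall n A tau, gpart al be d n A tau ->
    forall i j, (i < p)%nat -> (j < p)%nat ->
      Rabs (gsum p mu n A (fun l => f (tau l)) i j - M i j) <= eps.
Proof.
  intros HI Hu eps He.
  destruct (proj1 (int_spart _ _ _ _ _ _) HI (eps / 2) ltac:(lra)) as [d1 [Hd1 K1]].
  destruct (Hu (eps / 2) ltac:(lra)) as [d2 [Hd2 U2]].
  set (d := Rmin d1 d2 / 2). pose proof (Rmin_pos d1 d2 Hd1 Hd2).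
  pose proof (Rmin_l d1 d2). pose proof (Rmin_r d1 d2).
  exists d; split; [unfold d; lra |]. intros n A tau HG i j Hi Hj.
  destruct (spart_exists al be d Hab) as [N HS]; [unfold d; lra |].
  specialize (K1 _ _ _ (spart_weaken _ _ _ d1 _ _ _ HS ltac:(unfold d; lra)) i j Hi Hj).
  pose proof (gsum_close p al be mu Hmu d n A tau N (cell (ux al be N)) (ux al be N) f (eps / 2)
    i j HG (spart_gpart _ _ _ _ _ _ HS) ltac:(lra)
    ltac:(intros; apply U2; auto; unfold d in *; lra) Hi Hj).
  set (s := gsum p mu N (cell (ux al be N)) (fun l => f (ux al be N l)) i j) in *.
  set (g := gsum p mu n A (fun l => f (tau l)) i j) in *.
  replace (g - M i j) with ((g - s) + (s - M i j)) by ring.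
  eapply Rle_trans; [apply Rabs_triang | lra].
Qed.

Definition usum (f : R -> R) (N : nat) (i j : nat) : R :=
  gsum p mu (S N) (cell (ux al be (S N))) (fun l => f (ux al be (S N) l)) i j.

Lemma usum_close f : ucont al be f -> forall eps, 0 < eps -> exists d N0, 0 < d /\
  forall N n x xi, (N >= N0)%nat -> spart al be d n x xi ->
    forall i j, (i < p)%nat -> (j < p)%nat ->
      Rabs (gsum p mu n (cell x) (fun l => f (xi l)) i j - usum f N i j) <= eps.
Proof.
  intros Hu eps He. destruct (Hu eps He) as [d2 [Hd2 U2]].
  destruct (uniform_mesh al be (d2 / 2) Hab ltac:(lra)) as [N0 HN].
  exists (d2 / 2), N0; split; [lra |]. intros N n x xi HN0 HS i j Hi Hj.
  destruct (HN (S N) ltac:(lia)) as [A1 A2].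
  apply (gsum_close p al be mu Hmu (d2 / 2)); auto; try lra.
  - apply spart_gpart; auto.
  - apply spart_gpart, ux_spart; auto.
  - intros; apply U2; auto; lra.
Qed.

(* Existence of the integral of a uniformly continuous function, as the limit
   of the uniform sums (by completeness of R). *)
Lemma int_exists f : ucont al be f -> exists M, is_integral p mu al be f M.
Proof.
  intros Hu.
  assert (Hex : forall i j, exists l, (i < p)%nat -> (j < p)%nat -> Un_cv (fun N => usum f N i j) l).
  { intros i j. destruct (Compare_dec.lt_dec i p) as [Hi|Hi];
      [destruct (Compare_dec.lt_dec j p) as [Hj|Hj] |]; try (exists 0; intros; contradiction).
    assert (C : Cauchy_crit (fun N => usum f N i j)).
    { intros eps He. destruct (usum_close f Hu (eps / 4) ltac:(lra)) as [d [N0 [Hd H]]].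
      exists N0. intros n m Hn Hm. unfold Rdist.
      destruct (spart_exists al be d Hab Hd) as [K HS].
      pose proof (H n _ _ _ Hn HS i j Hi Hj). pose proof (H m _ _ _ Hm HS i j Hi Hj).
      set (g := gsum p mu K (cell (ux al be K)) (fun l => f (ux al be K l)) i j) in *.
      replace (usum f n i j - usum f m i j) with ((g - usum f m i j) - (g - usum f n i j)) by ring.
      eapply Rle_lt_trans; [apply Rabs_triang | rewrite Rabs_Ropp; lra]. }
    destruct (R_complete _ C) as [l Hl]. exists l; auto. }
  set (M := fun i j => proj1_sig (constructive_indefinite_description _ (Hex i j))).
  assert (HM : forall i j, (i < p)%nat -> (j < p)%nat -> Un_cv (fun N => usum f N i j) (M i j)).
  { intros i j Hi Hj. unfold M. destruct (constructive_indefinite_description _ (Hex i j)); auto. }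
  exists M. apply int_spart. intros eps He.
  destruct (usum_close f Hu (eps / 2) ltac:(lra)) as [d [N0 [Hd H]]].
  exists d; split; auto. intros n x xi HS i j Hi Hj.
  destruct (HM i j Hi Hj (eps / 2) ltac:(lra)) as [N1 HN1].
  specialize (HN1 (Nat.max N0 N1) ltac:(lia)). unfold Rdist in HN1.
  specialize (H (Nat.max N0 N1) n x xi ltac:(lia) HS i j Hi Hj).
  set (g := gsum p mu n (cell x) (fun l => f (xi l)) i j) in *.
  replace (g - M i j) with ((g - usum f (Nat.max N0 N1) i j) + (usum f (Nat.max N0 N1) i j - M i j))
    by ring.
  eapply Rle_lt_trans; [apply Rabs_triang | lra].
Qed.

Lemma int_one : is_integral p mu al be (fun _ => 1) idm.
Proof.
  apply int_spart. intros eps He. exists 1; split; [lra |]. intros n x xi HS i j Hi Hj.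
  unfold gsum. rewrite (sumR_ext n _ (fun l => mu (cell x l) i j)) by (intros; ring).
  rewrite (mm_dcover p al be mu Hmu n (cell x)), Rminus_diag, Rabs_R0; auto.
  apply (spart_gpart _ _ _ _ _ _ HS).
Qed.

End Integral.

Lemma int_of_sum p mu1 mu2 nu a b f1 f2 g M1 M2 :
  is_integral p mu1 a b f1 M1 -> is_integral p mu2 a b f2 M2 ->
  (forall n x xi i j, gsum p nu n (cell x) (fun l => g (xi l)) i j
     = gsum p mu1 n (cell x) (fun l => f1 (xi l)) i j + gsum p mu2 n (cell x) (fun l => f2 (xi l)) i j) ->
  is_integral p nu a b g (fun i j => M1 i j + M2 i j).
Proof.
  intros H1 H2 E. rewrite int_spart in H1, H2 |- *. intros eps He.
  destruct (H1 (eps / 2) ltac:(lra)) as [d1 [Hd1 K1]].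
  destruct (H2 (eps / 2) ltac:(lra)) as [d2 [Hd2 K2]].
  exists (Rmin d1 d2); split; [apply Rmin_pos; auto |]. intros n x xi HS i j Hi Hj.
  specialize (K1 n x xi (spart_weaken _ _ _ _ _ _ _ HS (Rmin_l _ _)) i j Hi Hj).
  specialize (K2 n x xi (spart_weaken _ _ _ _ _ _ _ HS (Rmin_r _ _)) i j Hi Hj).
  rewrite E.
  set (s1 := gsum p mu1 n (cell x) (fun l => f1 (xi l)) i j) in *.
  set (s2 := gsum p mu2 n (cell x) (fun l => f2 (xi l)) i j) in *.
  replace (s1 + s2 - (M1 i j + M2 i j)) with ((s1 - M1 i j) + (s2 - M2 i j)) by ring.
  eapply Rle_lt_trans; [apply Rabs_triang | lra].
Qed.

Lemma int_plus p mu a b f g M N : is_integral p mu a b f M -> is_integral p mu a b g N ->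
  is_integral p mu a b (fun x => f x + g x) (fun i j => M i j + N i j).
Proof.
  intros H1 H2. apply (int_of_sum p mu mu mu a b f g _ M N H1 H2).
  intros. unfold gsum. rewrite <- sumR_plus. apply sumR_ext; intros; ring.
Qed.

Lemma int_scal p mu a b f M c : is_integral p mu a b f M ->
  is_integral p mu a b (fun x => c * f x) (fun i j => c * M i j).
Proof.
  intros H eps He. assert (Hc : 0 < Rabs c + 1) by (pose proof (Rabs_pos c); lra).
  destruct (H (eps / (Rabs c + 1))) as [d [Hd K]]; [apply Rdiv_lt_0_compat; auto |].
  exists d; split; auto. intros n x xi Hn H0 Hb Hx i j Hi Hj.
  specialize (K n x xi Hn H0 Hb Hx i j Hi Hj).
  rewrite (sumR_ext n _ (fun l => c * (f (xi l) * mu (cell x l) i j))) by (intros; ring).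
  rewrite sumR_scal, <- Rmult_minus_distr_l, Rabs_mult.
  apply Rle_lt_trans with ((Rabs c + 1) * Rabs (sumR n (fun l => f (xi l) * mu (cell x l) i j) - M i j)).
  - apply Rmult_le_compat_r; [apply Rabs_pos | lra].
  - apply Rmult_lt_reg_l with (/ (Rabs c + 1)); [apply Rinv_0_lt_compat; auto |].
    rewrite <- Rmult_assoc, Rinv_l by lra. unfold Rdiv in K. lra.
Qed.

Lemma int_mix p mu nu a b f M N c1 c2 : is_integral p mu a b f M -> is_integral p nu a b f N ->
  is_integral p (fun B i j => c1 * mu B i j + c2 * nu B i j) a b f
    (fun i j => c1 * M i j + c2 * N i j).
Proof.
  intros H1 H2. apply (int_of_sum p mu nu _ a b (fun x => c1 * f x) (fun x => c2 * f x));
    [apply int_scal; auto | apply int_scal; auto |].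
  intros. unfold gsum. rewrite <- sumR_plus. apply sumR_ext; intros; ring.
Qed.

Lemma int_zero p mu a b : is_integral p mu a b (fun _ => 0) (fun _ _ => 0).
Proof.
  intros eps He. exists 1; split; [lra |]. intros.
  rewrite sumR_zero, Rminus_0_r, Rabs_R0; auto. intros; ring.
Qed.

Lemma int_sum p mu a b m (h : nat -> R -> R) (Mk : nat -> Mat) :
  (forall k, (k < m)%nat -> is_integral p mu a b (h k) (Mk k)) ->
  is_integral p mu a b (fun x => sumR m (fun k => h k x)) (fun i j => sumR m (fun k => Mk k i j)).
Proof.
  induction m; intros H; simpl; [apply int_zero |].
  apply int_plus; [apply IHm; intros; apply H; lia | apply H; lia].
Qed.

Lemma int_fext p mu a b f g M : (forall x, a <= x <= b -> f x = g x) ->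
  is_integral p mu a b f M -> is_integral p mu a b g M.
Proof.
  intros E H eps He. destruct (H eps He) as [d [Hd K]]. exists d; split; auto.
  intros n x xi Hn H0 Hb Hx i j Hi Hj. specialize (K n x xi Hn H0 Hb Hx i j Hi Hj).
  assert (HS : spart a b d n x xi) by (repeat split; auto; apply Hx; auto).
  destruct (spart_gpart _ _ _ _ _ _ HS) as [_ [Ht _]].
  rewrite (sumR_ext n _ (fun l => f (xi l) * mu (cell x l) i j)); auto.
  intros l Hl. rewrite E; auto.
Qed.

Lemma int_meq p mu a b f M M' : meq p M M' -> is_integral p mu a b f M -> is_integral p mu a b f M'.
Proof.
  intros E H eps He. destruct (H eps He) as [d [Hd K]]. exists d; split; auto.
  intros n x xi Hn H0 Hb Hx i j Hi Hj. rewrite <- E; auto.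
Qed.

Lemma int_mext p mu nu a b f M : (forall B, borel B -> meq p (mu B) (nu B)) ->
  is_integral p mu a b f M -> is_integral p nu a b f M.
Proof.
  intros E H eps He. destruct (H eps He) as [d [Hd K]]. exists d; split; auto.
  intros n x xi Hn H0 Hb Hx i j Hi Hj. specialize (K n x xi Hn H0 Hb Hx i j Hi Hj).
  rewrite (sumR_ext n _ (fun l => f (xi l) * mu (cell x l) i j)); auto.
  intros l Hl. rewrite E; auto. apply borel_cell.
Qed.

Lemma int_sym p mu a b f M : is_matrix_measure p a b mu -> a < b ->
  is_integral p mu a b f M -> msym p M.
Proof.
  intros Hmu Hab H i j Hi Hj. apply Rminus_diag_uniq, small_zero. intros eps He.
  rewrite int_spart in H. destruct (H (eps / 2) ltac:(lra)) as [d [Hd K]].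
  destruct (spart_exists a b d Hab Hd) as [N HS].
  pose proof (K N _ _ HS i j Hi Hj). pose proof (K N _ _ HS j i Hj Hi).
  set (x := ux a b N) in *. unfold gsum in *.
  rewrite (sumR_ext N (fun l => f (x l) * mu (cell x l) j i) (fun l => f (x l) * mu (cell x l) i j)) in H1.
  - set (s := sumR N (fun l => f (x l) * mu (cell x l) i j)) in *.
    replace (M i j - M j i) with ((s - M j i) - (s - M i j)) by ring.
    eapply Rle_lt_trans; [apply Rabs_triang | rewrite Rabs_Ropp; lra].
  - intros l Hl. f_equal. destruct (mm_psd p a b mu Hmu _ (borel_cell x l)) as [Hs _]. apply Hs; auto.
Qed.

(** * Push-forward measures and change of variables *)

Definition pf (phi : R -> R) (mu : mmeasure) : mmeasure := fun B => mu (fun x => B (phi x)).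

Lemma pf_mm p al be a' b' mu phi : is_matrix_measure p al be mu ->
  (forall c, borel (fun x => phi x <= c)) -> (forall x, al <= x <= be -> a' <= phi x <= b') ->
  is_matrix_measure p a' b' (pf phi mu).
Proof.
  intros Hmu Hb Hm. pose proof Hmu as [Hpsd [Hadd [Hc Hn]]].
  pose proof (borel_preimage phi Hb) as Hpre. unfold pf. split; [| split; [| split]].
  - intros B HB. apply Hpsd, Hpre; auto.
  - intros A C HA Hd HC HCx.
    apply (Hadd (fun n x => A n (phi x)) (fun x => C (phi x))); auto.
    intros n m x; apply Hd.
  - intros B HB Hout. apply Hc; [apply Hpre; auto |]. intros x Hx.
    destruct (Rle_dec al x); destruct (Rle_dec x be); try lra.
    specialize (Hm x ltac:(lra)). specialize (Hout _ Hx). lra.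
  - intros i j Hi Hj. assert (HB1 : borel (fun x => a' <= phi x <= b')) by exact (Hpre _ (borel_cc a' b')).
    rewrite (mm_conc p al be mu Hmu _ HB1 i j Hi Hj).
    rewrite (mm_ext p al be mu Hmu _ (fun x => al <= x <= be)); auto.
    + apply borel_and; auto; apply borel_cc.
    + intros x; split; [tauto | intros H; split; auto].
Qed.

Definition sums_transfer (p : nat) (al be a' b' : R) (mu nu : mmeasure) (f g : R -> R) : Prop :=
  forall d eta, 0 < d -> 0 < eta -> exists d', 0 < d' /\ forall n x xi, spart a' b' d' n x xi ->
    exists m A tau c, gpart al be d m A tau /\
      (forall l, (l < m)%nat -> (exists t, al <= t <= be /\ A l t) -> Rabs (c l - f (tau l)) <= eta) /\
      forall i j, (i < p)%nat -> (j < p)%nat ->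
        gsum p nu n (cell x) (fun l => g (xi l)) i j = gsum p mu m A c i j.

Lemma int_transfer p al be a' b' mu nu f g M : is_matrix_measure p al be mu -> al < be ->
  is_integral p mu al be f M -> ucont al be f -> sums_transfer p al be a' b' mu nu f g ->
  is_integral p nu a' b' g M.
Proof.
  intros Hmu Hab HI Hu Hr. apply int_spart. intros eps He.
  destruct (gsum_approx p al be mu Hmu Hab f M HI Hu (eps / 2) ltac:(lra)) as [d [Hd HG]].
  destruct (Hr d (eps / 4) Hd ltac:(lra)) as [d' [Hd' HR]]. exists d'; split; auto.
  intros n x xi HS i j Hi Hj. destruct (HR n x xi HS) as [m [A [tau [c [HP [Hc HE]]]]]].
  rewrite HE by auto. pose proof (HG m A tau HP i j Hi Hj).
  pose proof (gsum_coef_close p al be mu Hmu m A c (fun l => f (tau l)) (eps / 4) i j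
    (proj1 HP) Hi Hj ltac:(lra) Hc).
  set (g1 := gsum p mu m A c i j) in *. set (g2 := gsum p mu m A (fun l => f (tau l)) i j) in *.
  replace (g1 - M i j) with ((g1 - g2) + (g2 - M i j)) by ring.
  eapply Rle_lt_trans; [apply Rabs_triang | lra].
Qed.

Lemma pf_sums_transfer p al be a' b' mu phi psi f g :
  (forall c, borel (fun x => phi x <= c)) -> (forall t, al <= t <= be -> a' <= phi t <= b') ->
  (forall y, a' <= y <= b' -> al <= psi y <= be) ->
  (forall d eta, 0 < d -> 0 < eta -> exists d', 0 < d' /\ forall y t, a' <= y <= b' ->
     al <= t <= be -> Rabs (phi t - y) <= d' ->
     Rabs (t - psi y) <= d /\ Rabs (g y - f (psi y)) <= eta) ->
  sums_transfer p al be a' b' mu (pf phi mu) f g.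
Proof.
  intros Hb Hm Hpsi Happ d eta Hd He. destruct (Happ d eta Hd He) as [d' [Hd' Ha]].
  exists d'; split; auto. intros n x xi HS.
  destruct (spart_gpart _ _ _ _ _ _ HS) as [[HB [Hc Hdis]] [Ht Hf]].
  exists n, (fun l t => cell x l (phi t)), (fun l => psi (xi l)), (fun l => g (xi l)).
  split; [split; [split; [| split] | split] | split].
  - intros l Hl. apply borel_preimage; auto.
  - intros t Htt. apply Hc; auto.
  - intros t l r Htt Hl Hr H1 H2. eapply Hdis; eauto.
  - intros l Hl; apply Hpsi; auto.
  - intros l t Hl Htt Hc1. apply (Ha (xi l) t); auto.
  - intros l Hl [t [Htt Hc1]]. apply (Ha (xi l) t); auto.
  - intros; reflexivity.
Qed.

Lemma lip_ucont al be f L : 0 <= L ->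
  (forall s t, al <= s <= be -> al <= t <= be -> Rabs (f s - f t) <= L * Rabs (s - t)) ->
  ucont al be f.
Proof.
  intros HL H eps He. exists (eps / (L + 1)); split; [apply Rdiv_lt_0_compat; lra |].
  intros s t Hs Ht Hst. eapply Rle_trans; [apply H; auto |].
  apply Rle_trans with ((L + 1) * (eps / (L + 1))).
  - apply Rmult_le_compat; try lra. apply Rabs_pos.
  - right; field; lra.
Qed.

Lemma pow_lip k R x y : Rabs x <= R -> Rabs y <= R ->
  Rabs (x ^ k - y ^ k) <= INR k * R ^ (k - 1) * Rabs (x - y).
Proof.
  intros Hx Hy. assert (HR : 0 <= R) by (pose proof (Rabs_pos x); lra).
  induction k as [|k IH]; [simpl; rewrite Rminus_diag, Rabs_R0; lra |].
  replace (x ^ S k - y ^ S k) with (x * (x ^ k - y ^ k) + y ^ k * (x - y)) by (simpl; ring).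
  eapply Rle_trans; [apply Rabs_triang |]. rewrite !Rabs_mult.
  assert (Rabs (y ^ k) <= R ^ k)
    by (rewrite <- RPow_abs; apply pow_incr; split; auto; apply Rabs_pos).
  pose proof (Rabs_pos (x ^ k - y ^ k)). pose proof (Rabs_pos (x - y)).
  destruct k as [|k].
  - simpl in *. rewrite Rminus_diag, Rabs_R0, Rabs_R1. lra.
  - replace (S (S k) - 1)%nat with (S k) by lia. replace (S k - 1)%nat with k in IH by lia.
    rewrite S_INR. simpl pow in *.
    apply Rle_trans with (R * (INR (S k) * R ^ k * Rabs (x - y)) + R * R ^ k * Rabs (x - y)).
    + apply Rplus_le_compat; [apply Rmult_le_compat; auto; apply Rabs_pos |].
      apply Rmult_le_compat_r; auto.
    + rewrite S_INR. right; ring.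
Qed.

Lemma bound_abs al be s : al <= s <= be -> Rabs s <= Rabs al + Rabs be.
Proof. intros H. unfold Rabs; repeat destruct Rcase_abs; lra. Qed.

Lemma ucont_pow al be k : ucont al be (fun x => x ^ k).
Proof.
  set (R := Rabs al + Rabs be). apply lip_ucont with (INR k * R ^ (k - 1)).
  - apply Rmult_le_pos; [apply pos_INR | apply pow_le].
    unfold R; pose proof (Rabs_pos al); pose proof (Rabs_pos be); lra.
  - intros s t Hs Ht. apply pow_lip; unfold R; apply bound_abs; auto.
Qed.

Lemma ucont_comp_aff al be s c0 (g : R -> R) : (forall a b, ucont a b g) ->
  ucont al be (fun t => g (s * t + c0)).
Proof.
  intros Hg eps He. set (R := Rabs s * (Rabs al + Rabs be) + Rabs c0).
  pose proof (Rabs_pos s) as Hs.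
  destruct (Hg (- R) R eps He) as [d [Hd H]].
  exists (d / (Rabs s + 1)); split; [apply Rdiv_lt_0_compat; lra |].
  assert (Bd : forall t, al <= t <= be -> - R <= s * t + c0 <= R).
  { intros t Ht. cut (Rabs (s * t + c0) <= R); [unfold Rabs; destruct Rcase_abs; intros; lra |].
    unfold R. eapply Rle_trans; [apply Rabs_triang |]. rewrite Rabs_mult.
    apply Rplus_le_compat_r, Rmult_le_compat_l; [apply Rabs_pos | apply bound_abs; auto]. }
  intros a b Ha Hb Hab. apply H; auto.
  replace (s * a + c0 - (s * b + c0)) with (s * (a - b)) by ring. rewrite Rabs_mult.
  apply Rle_trans with ((Rabs s + 1) * (d / (Rabs s + 1))).
  - apply Rmult_le_compat; try apply Rabs_pos; lra.
  - right; field. lra.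
Qed.

Lemma int_affine p al be a' b' mu s c0 g M : is_matrix_measure p al be mu -> al < be -> s <> 0 ->
  (forall t, al <= t <= be -> a' <= s * t + c0 <= b') ->
  (forall y, a' <= y <= b' -> al <= (y - c0) / s <= be) ->
  is_integral p mu al be (fun t => g (s * t + c0)) M -> ucont al be (fun t => g (s * t + c0)) ->
  is_integral p (pf (fun t => s * t + c0) mu) a' b' g M.
Proof.
  intros Hmu Hab Hs Hm Hpsi HI Hu. eapply int_transfer; eauto.
  apply pf_sums_transfer with (psi := fun y => (y - c0) / s); auto; [apply affine_borel; auto |].
  intros d eta Hd He. pose proof (Rabs_pos_lt s Hs).
  exists (d * Rabs s); split; [apply Rmult_lt_0_compat; auto |].
  intros y t Hy Ht Hd'. split.
  - replace (t - (y - c0) / s) with ((s * t + c0 - y) / s) by (field; auto).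
    unfold Rdiv. rewrite Rabs_mult, Rabs_inv.
    apply Rmult_le_reg_r with (Rabs s); auto.
    rewrite Rmult_assoc, Rinv_l by lra. lra.
  - replace (s * ((y - c0) / s) + c0) with y by (field; auto).
    rewrite Rminus_diag, Rabs_R0; lra.
Qed.

(* Binomial coefficients of (s t + c0)^j = sum_i affc s c0 j i t^i. *)
Definition affc (s c0 : R) (j i : nat) : R := C j i * s ^ i * c0 ^ (j - i).

(* The j-th moment of the image measure in terms of the moments T_0..T_j. *)
Definition AM (s c0 : R) (j : nat) (T : nat -> Mat) : Mat :=
  fun a b => sumR (S j) (fun i => affc s c0 j i * T i a b).

Lemma aff_binom s c0 j t : (s * t + c0) ^ j = sumR (S j) (fun i => affc s c0 j i * t ^ i).
Proof.
  rewrite binomial, sumR_f_R0. apply sumR_ext; intros i Hi.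
  unfold affc. rewrite Rpow_mult_distr. ring.
Qed.

Lemma AM_meq p s c0 j T T' : (forall i, (i <= j)%nat -> meq p (T i) (T' i)) ->
  meq p (AM s c0 j T) (AM s c0 j T').
Proof. intros H a b Ha Hb. unfold AM. apply sumR_ext; intros i Hi. rewrite H; auto; lia. Qed.

Lemma AM_top s c0 j T a b :
  AM s c0 j T a b = s ^ j * T j a b + sumR j (fun i => affc s c0 j i * T i a b).
Proof.
  unfold AM. simpl. unfold affc at 2.
  replace (C j j) with 1.
  - rewrite Nat.sub_diag. simpl. ring.
  - unfold C. rewrite Nat.sub_diag. simpl (Factorial.fact 0). rewrite Rmult_1_r.
    field. apply INR_fact_neq_0.
Qed.

Lemma mom_affine p al be a' b' mu s c0 j T : is_matrix_measure p al be mu -> al < be -> s <> 0 ->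
  (forall t, al <= t <= be -> a' <= s * t + c0 <= b') ->
  (forall y, a' <= y <= b' -> al <= (y - c0) / s <= be) ->
  (forall i, (i <= j)%nat -> is_moment p mu al be i (T i)) ->
  is_moment p (pf (fun t => s * t + c0) mu) a' b' j (AM s c0 j T).
Proof.
  intros Hmu Hab Hs Hm Hpsi HT. unfold is_moment.
  apply (int_affine p al be a' b' mu s c0 (fun y => y ^ j)); auto.
  - apply int_fext with (fun t => sumR (S j) (fun i => affc s c0 j i * t ^ i)).
    + intros; symmetry; apply aff_binom.
    + apply int_sum with (h := fun i t => affc s c0 j i * t ^ i)
        (Mk := fun i a b => affc s c0 j i * T i a b).
      intros k Hk. apply int_scal, HT; lia.
  - apply (ucont_comp_aff al be s c0 (fun y => y ^ j)). intros; apply ucont_pow.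
Qed.

(** * Moment sets and their Loewner-extremal elements *)

Lemma mom_idm p mu a b : is_matrix_measure p a b mu -> a < b -> is_moment p mu a b 0 idm.
Proof. intros. apply int_fext with (fun _ => 1); [intros; simpl; auto | apply int_one; auto]. Qed.

Lemma mom0 p mu a b M : is_matrix_measure p a b mu -> a < b -> is_moment p mu a b 0 M -> meq p M idm.
Proof. intros Hmu Hab H. eapply int_unique; eauto. apply mom_idm; auto. Qed.

Lemma ms_meq p a b T k A B : moment_set p a b T k A -> meq p A B -> moment_set p a b T k B.
Proof. intros [r [H1 [H2 H3]]] E. exists r; split; [| split]; auto. eapply int_meq; eauto. Qed.

Lemma ms_sym p a b T k A : a < b -> moment_set p a b T k A -> msym p A.
Proof. intros Hab [r [H1 [H2 H3]]]. eapply int_sym; eauto. Qed.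

Definition Fmap (c : R) (C0 : Mat) (A : Mat) : Mat := fun i j => c * A i j + C0 i j.

Lemma qform_Fmap p c C0 A v : qform p (Fmap c C0 A) v = c * qform p A v + qform p C0 v.
Proof.
  rewrite <- (Rmult_1_l (qform p C0 v)), <- qform_lin. apply qform_meq.
  intros i j _ _; unfold Fmap; ring.
Qed.

Lemma msym_Fmap p c C0 A : msym p A -> msym p C0 -> msym p (Fmap c C0 A).
Proof. intros H1 H2 i j Hi Hj. unfold Fmap. rewrite H1, H2; auto. Qed.

Section Extremes.
Variables (p : nat) (X Y : Mat -> Prop) (c : R) (C0 : Mat).
Hypothesis HC0 : msym p C0.
Hypothesis SX : forall A, X A -> msym p A.
Hypothesis SY : forall A, Y A -> msym p A.
Hypothesis fwd : forall A, Y A -> X (Fmap c C0 A).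
Hypothesis bwd : forall B, X B -> exists A, Y A /\ meq p B (Fmap c C0 A).

Lemma extremes_max TX TY : 0 < c -> X TX -> (forall A, X A -> loewner_le p A TX) ->
  Y TY -> (forall A, Y A -> loewner_le p A TY) -> meq p TX (Fmap c C0 TY).
Proof.
  intros Hc HX MX HY MY. apply qform_inj; [apply SX; auto | apply msym_Fmap; auto |].
  intros v. apply Rle_antisym.
  - destruct (bwd TX HX) as [A [HA E]]. rewrite (qform_meq p _ _ v E), !qform_Fmap.
    pose proof (loewner_qform p _ _ (MY A HA) v). nra.
  - apply loewner_qform, MX, fwd; auto.
Qed.

Lemma extremes_min TX TY : 0 < c -> X TX -> (forall A, X A -> loewner_le p TX A) ->
  Y TY -> (forall A, Y A -> loewner_le p TY A) -> meq p TX (Fmap c C0 TY).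
Proof.
  intros Hc HX MX HY MY. apply qform_inj; [apply SX; auto | apply msym_Fmap; auto |].
  intros v. apply Rle_antisym.
  - apply loewner_qform, MX, fwd; auto.
  - destruct (bwd TX HX) as [A [HA E]]. rewrite (qform_meq p _ _ v E), !qform_Fmap.
    pose proof (loewner_qform p _ _ (MY A HA) v). nra.
Qed.

Lemma extremes_swap TX TY : c < 0 -> X TX -> (forall A, X A -> loewner_le p A TX) ->
  Y TY -> (forall A, Y A -> loewner_le p TY A) -> meq p TX (Fmap c C0 TY).
Proof.
  intros Hc HX MX HY MY. apply qform_inj; [apply SX; auto | apply msym_Fmap; auto |].
  intros v. apply Rle_antisym.
  - destruct (bwd TX HX) as [A [HA E]]. rewrite (qform_meq p _ _ v E), !qform_Fmap.
    pose proof (loewner_qform p _ _ (MY A HA) v). nra.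
  - apply loewner_qform, MX, fwd; auto.
Qed.
End Extremes.

Lemma canonical_transport p al be mu k U a' b' nu k' V c :
  al < be -> a' < b' -> 0 < c ->
  canonical_moment p al be mu k U -> canonical_moment p a' b' nu k' V ->
  (forall T T', (forall j, (j <= k)%nat -> is_moment p mu al be j (T j)) ->
     (forall j, (j <= k')%nat -> is_moment p nu a' b' j (T' j)) ->
     exists C0, msym p C0 /\
       (forall A, moment_set p al be T k A -> moment_set p a' b' T' k' (Fmap c C0 A)) /\
       (forall B, moment_set p a' b' T' k' B ->
          exists A, moment_set p al be T k A /\ meq p B (Fmap c C0 A)) /\
       meq p (T' k') (Fmap c C0 (T k))) ->
  meq p V U.
Proof.
  intros Hab Hab' Hc [_ [T [Tp [Tm [S [HT [HP [MP [HM [MM [PD [PS [E EU]]]]]]]]]]]]]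
    [_ [T' [Tp' [Tm' [S' [HT' [HP' [MP' [HM' [MM' [PD' [PS' [E' EV]]]]]]]]]]]]] Hrel.
  destruct (Hrel T T' HT HT') as [C0 [HC0 [fwd [bwd Etop]]]].
  assert (SX : forall A, moment_set p a' b' T' k' A -> msym p A)
    by (intros A HA; exact (ms_sym _ _ _ _ _ _ Hab' HA)).
  assert (SY : forall A, moment_set p al be T k A -> msym p A)
    by (intros A HA; exact (ms_sym _ _ _ _ _ _ Hab HA)).
  pose proof (extremes_max p _ _ c C0 HC0 SX SY fwd bwd Tp' Tp Hc HP' MP' HP MP) as Ep.
  pose proof (extremes_min p _ _ c C0 HC0 SX SY fwd bwd Tm' Tm Hc HM' MM' HM MM) as Em.
  apply (canonical_formula_scale p S S' (msub Tp Tm) (msub Tp' Tm') (msub (T k) Tm)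
    (msub (T' k') Tm') U V c); auto; [apply PD | |];
    intros i j Hi Hj; unfold msub; rewrite ?Ep, ?Em, ?Etop by auto; unfold Fmap; ring.
Qed.

Lemma canonical_reflection p al be mu k U : al < be ->
  canonical_moment p al be mu k U ->
  (forall T, (forall j, (j <= k)%nat -> is_moment p mu al be j (T j)) ->
     exists C0, msym p C0 /\
       (forall A, moment_set p al be T k A -> moment_set p al be T k (Fmap (-1) C0 A)) /\
       meq p (T k) (Fmap (-1) C0 (T k))) ->
  meq p U half_idm.
Proof.
  intros Hab [_ [T [Tp [Tm [S [HT [HP [MP [HM [MM [PD [PS [E EU]]]]]]]]]]]]] Hrel.
  destruct (Hrel T HT) as [C0 [HC0 [fwd Etop]]].
  assert (bwd : forall B, moment_set p al be T k B ->
                  exists A, moment_set p al be T k A /\ meq p B (Fmap (-1) C0 A)).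
  { intros B HB. exists (Fmap (-1) C0 B). split; [apply fwd; auto |].
    intros i j _ _. unfold Fmap. ring. }
  assert (SX : forall A, moment_set p al be T k A -> msym p A)
    by (intros A HA; exact (ms_sym _ _ _ _ _ _ Hab HA)).
  pose proof (extremes_swap p _ _ (-1) C0 HC0 SX SX fwd bwd Tp Tm ltac:(lra) HP MP HM MM) as Ep.
  apply (canonical_formula_half p S (msub Tp Tm) (msub (T k) Tm)); auto; [apply PD |].
  intros i j Hi Hj. pose proof (Etop i j Hi Hj). pose proof (Ep i j Hi Hj).
  unfold msub, Fmap in *. lra.
Qed.

Definition Tx (k : nat) (T : nat -> Mat) (A : Mat) : nat -> Mat :=
  fun i => if Nat.ltb i k then T i else A.

Lemma Tx_moments p r a b k T A : is_matrix_measure p a b r -> a < b -> meq p (T O) idm ->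
  (forall j, (1 <= j)%nat -> (j < k)%nat -> is_moment p r a b j (T j)) -> is_moment p r a b k A ->
  forall i, (i <= k)%nat -> is_moment p r a b i (Tx k T A i).
Proof.
  intros Hr Hab H0 Hl Ht i Hi. unfold Tx. destruct (Nat.ltb i k) eqn:E.
  - apply Nat.ltb_lt in E. destruct i as [|i].
    + eapply int_meq; [apply meq_sym, H0 | apply mom_idm; auto].
    + apply Hl; lia.
  - apply Nat.ltb_ge in E. replace i with k by lia. auto.
Qed.

Definition Ccst (s c0 : R) (k : nat) (T : nat -> Mat) : Mat :=
  fun a b => sumR k (fun i => affc s c0 k i * T i a b).

Lemma AM_Tx_low p s c0 j k T A : (j < k)%nat -> meq p (AM s c0 j (Tx k T A)) (AM s c0 j T).
Proof.
  intros Hj. apply AM_meq. intros i Hi. unfold Tx.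
  rewrite (proj2 (Nat.ltb_lt i k)) by lia. apply meq_refl.
Qed.

Lemma AM_Tx_top p s c0 k T A : meq p (AM s c0 k (Tx k T A)) (Fmap (s ^ k) (Ccst s c0 k T) A).
Proof.
  intros i j _ _. rewrite AM_top. unfold Fmap, Tx, Ccst. rewrite Nat.ltb_irrefl. f_equal.
  apply sumR_ext; intros l Hl. rewrite (proj2 (Nat.ltb_lt l k)); auto.
Qed.

Lemma msym_Ccst p s c0 k T : (forall i, (i < k)%nat -> msym p (T i)) -> msym p (Ccst s c0 k T).
Proof. intros H a b Ha Hb. apply sumR_ext; intros. rewrite H; auto. Qed.

Lemma pf_affine_moments p al be a' b' rho s c0 k T A :
  is_matrix_measure p al be rho -> al < be -> s <> 0 ->
  (forall t, al <= t <= be -> a' <= s * t + c0 <= b') ->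
  (forall y, a' <= y <= b' -> al <= (y - c0) / s <= be) -> meq p (T O) idm ->
  (forall j, (1 <= j)%nat -> (j < k)%nat -> is_moment p rho al be j (T j)) ->
  is_moment p rho al be k A ->
  (forall j, (j < k)%nat -> is_moment p (pf (fun t => s * t + c0) rho) a' b' j (AM s c0 j T)) /\
  is_moment p (pf (fun t => s * t + c0) rho) a' b' k (Fmap (s ^ k) (Ccst s c0 k T) A).
Proof.
  intros Hr Hab Hs Hm Hi H0 Hl Ht. pose proof (Tx_moments p rho al be k T A Hr Hab H0 Hl Ht) as Hx.
  split.
  - intros j Hj. eapply int_meq; [apply AM_Tx_low; eauto |].
    apply mom_affine with al be; auto. intros; apply Hx; lia.
  - eapply int_meq; [apply AM_Tx_top |]. apply mom_affine with al be; auto.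
Qed.

Lemma pf_affine_relation p al be a' b' mu nu s c0 k T T' :
  is_matrix_measure p al be mu -> al < be -> a' < b' -> s <> 0 ->
  (forall t, al <= t <= be -> a' <= s * t + c0 <= b') ->
  (forall y, a' <= y <= b' -> al <= (y - c0) / s <= be) ->
  (forall B, borel B -> meq p (pf (fun t => s * t + c0) mu B) (nu B)) ->
  (forall j, (j <= k)%nat -> is_moment p mu al be j (T j)) ->
  (forall j, (j <= k)%nat -> is_moment p nu a' b' j (T' j)) ->
  forall j, (j <= k)%nat -> meq p (T' j) (AM s c0 j T).
Proof.
  intros Hmu Hab Hab' Hs Hm Hi E HT HT' j Hj.
  apply (int_unique p nu a' b' (fun x => x ^ j)); [lra | apply HT'; auto |].
  apply int_mext with (1 := E). apply mom_affine with al be; auto. intros; apply HT; lia.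
Qed.

Lemma pf_pf_id p al be r phi psi : is_matrix_measure p al be r -> (forall x, phi (psi x) = x) ->
  forall B, borel B -> meq p (pf phi (pf psi r) B) (r B).
Proof.
  intros Hr H B HB i j Hi Hj. unfold pf. symmetry. apply (mm_ext p al be r Hr); auto.
  intros x; rewrite H; tauto.
Qed.

Section AffineCorrespondence.
Variables (p : nat) (al be a' b' s c0 : R).
Hypotheses (Hab : al < be) (Hab' : a' < b') (Hs : s <> 0).
Hypothesis Hphi : forall t, al <= t <= be -> a' <= s * t + c0 <= b'.
Hypothesis Hpsi : forall y, a' <= y <= b' -> al <= (y - c0) / s <= be.

Let s' := / s.
Let c' := - c0 / s.

Lemma psi_maps y : a' <= y <= b' -> al <= s' * y + c' <= be.
Proof. intros. replace (s' * y + c') with ((y - c0) / s) by (unfold s', c'; field; auto). auto. Qed.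

Lemma psi_inv_maps t : al <= t <= be -> a' <= (t - c') / s' <= b'.
Proof. intros. replace ((t - c') / s') with (s * t + c0) by (unfold s', c'; field; auto). auto. Qed.

Lemma s'_neq0 : s' <> 0.
Proof. apply Rinv_neq_0_compat; auto. Qed.

Lemma affine_ms_fwd k T T' A : meq p (T O) idm ->
  (forall j, (1 <= j)%nat -> (j < k)%nat -> meq p (T' j) (AM s c0 j T)) ->
  moment_set p al be T k A -> moment_set p a' b' T' k (Fmap (s ^ k) (Ccst s c0 k T) A).
Proof.
  intros H0 HT [r [Hr [Hl Ht]]]. exists (pf (fun t => s * t + c0) r).
  destruct (pf_affine_moments p al be a' b' r s c0 k T A) as [Low Top]; auto.
  split; [apply pf_mm with al be; auto; apply affine_borel; auto |]. split; auto.
  intros j Hj1 Hj2. eapply int_meq; [apply meq_sym, HT; auto | apply Low; auto].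
Qed.

(* Conversely every moment vector on [a',b'] comes from one on [al,be]: pull
   its measure back along psi and push it forward again. *)
Lemma affine_ms_bwd k T T' B : meq p (T O) idm -> meq p (T' O) idm ->
  (forall j, (1 <= j)%nat -> (j < k)%nat -> meq p (T' j) (AM s c0 j T)) ->
  (forall j, (1 <= j)%nat -> (j < k)%nat -> meq p (T j) (AM s' c' j T')) ->
  moment_set p a' b' T' k B ->
  exists A, moment_set p al be T k A /\ meq p B (Fmap (s ^ k) (Ccst s c0 k T) A).
Proof.
  intros H0 H0' HT HT' [r [Hr [Hl Ht]]].
  set (rho := pf (fun y => s' * y + c') r).
  assert (Hrho : is_matrix_measure p al be rho)
    by (apply pf_mm with a' b'; auto; [apply affine_borel, s'_neq0 | apply psi_maps]).
  destruct (pf_affine_moments p a' b' al be r s' c' k T' B) as [Low Top];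
    auto using s'_neq0, psi_maps, psi_inv_maps.
  set (A := Fmap (s' ^ k) (Ccst s' c' k T') B) in *.
  assert (HlA : forall j, (1 <= j)%nat -> (j < k)%nat -> is_moment p rho al be j (T j))
    by (intros j Hj1 Hj2; eapply int_meq; [apply meq_sym, HT'; auto | apply Low; auto]).
  exists A. split; [exists rho; auto |].
  destruct (pf_affine_moments p al be a' b' rho s c0 k T A) as [_ Top']; auto.
  apply (int_unique p r a' b' (fun x => x ^ k)); [lra | exact Ht |].
  apply int_mext with (2 := Top'). apply (pf_pf_id p a' b' r); auto.
  intros x. unfold s', c'. field. auto.
Qed.

End AffineCorrespondence.

Lemma AM_Fmap p s c0 k T : meq p (AM s c0 k T) (Fmap (s ^ k) (Ccst s c0 k T) (T k)).
Proof. intros i j _ _. rewrite AM_top. reflexivity. Qed.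

(** * Part (a): affine images *)

Lemma image_affine_correspondence p mu a b n T T' : is_matrix_measure p 0 1 mu -> a < b ->
  (forall j, (j <= n)%nat -> is_moment p mu 0 1 j (T j)) ->
  (forall j, (j <= n)%nat -> is_moment p (image_affine a b mu) a b j (T' j)) ->
  exists C0, msym p C0 /\
    (forall A, moment_set p 0 1 T n A -> moment_set p a b T' n (Fmap ((b - a) ^ n) C0 A)) /\
    (forall B, moment_set p a b T' n B ->
       exists A, moment_set p 0 1 T n A /\ meq p B (Fmap ((b - a) ^ n) C0 A)) /\
    meq p (T' n) (Fmap ((b - a) ^ n) C0 (T n)).
Proof.
  intros Hmu Hab HT HT'. set (s := b - a). set (nu := image_affine a b mu).
  assert (Hs : s <> 0) by (unfold s; lra).
  assert (Hphi : forall t, 0 <= t <= 1 -> a <= s * t + a <= b) by (intros; unfold s; nra).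
  assert (Hpsi : forall y, a <= y <= b -> 0 <= (y - a) / s <= 1).
  { intros y Hy. assert (0 < s) by (unfold s; lra). split.
    - unfold Rdiv. apply Rmult_le_pos; [lra | left; apply Rinv_0_lt_compat; lra].
    - apply Rmult_le_reg_r with s; auto. unfold Rdiv. rewrite Rmult_assoc, Rinv_l by lra.
      unfold s; lra. }
  assert (Hnu : is_matrix_measure p a b nu) by (apply pf_mm with 0 1; auto; apply affine_borel; auto).
  assert (H01 : (0 < 1)%R) by lra.
  assert (RelT' : forall j, (j <= n)%nat -> meq p (T' j) (AM s a j T)).
  { apply (pf_affine_relation p 0 1 a b mu nu s a n T T'); auto. intros; apply meq_refl. }
  assert (RelT : forall j, (j <= n)%nat -> meq p (T j) (AM (/ s) (- a / s) j T')).
  { apply (pf_affine_relation p a b 0 1 nu mu (/ s) (- a / s) n T' T);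
      try lra; try assumption.
    - apply Rinv_neq_0_compat; auto.
    - apply psi_maps; auto.
    - apply psi_inv_maps; auto.
    - apply (pf_pf_id p 0 1 mu (fun t => / s * t + - a / s) (fun x => s * x + a)); auto.
      intros x. field. auto. }
  assert (T0 : meq p (T O) idm) by (apply (mom0 p mu 0 1); auto; apply HT; lia).
  assert (T0' : meq p (T' O) idm) by (apply (mom0 p nu a b); auto; apply HT'; lia).
  exists (Ccst s a n T). split; [| split; [| split]].
  - apply msym_Ccst. intros i Hi. apply (int_sym p mu 0 1 (fun x => x ^ i)); auto. apply HT; lia.
  - intros A. apply (affine_ms_fwd p 0 1 a b s a H01 Hs Hphi Hpsi n T T' A T0).
    intros j Hj1 Hj2; apply RelT'; lia.
  - intros B. apply (affine_ms_bwd p 0 1 a b s a H01 Hab Hs Hphi Hpsi n T T' B T0 T0');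
      intros j Hj1 Hj2; [apply RelT' | apply RelT]; lia.
  - eapply meq_trans; [apply RelT'; auto | apply AM_Fmap].
Qed.

Lemma part_a (p : nat) (mu : mmeasure) (a b : R) (n : nat) (U V : Mat) :
  is_matrix_measure p 0 1 mu -> a < b ->
  canonical_moment p 0 1 mu n U -> canonical_moment p a b (image_affine a b mu) n V ->
  meq p V U.
Proof.
  intros Hmu Hab CU CV.
  apply (canonical_transport p 0 1 mu n U a b (image_affine a b mu) n V ((b - a) ^ n));
    auto; try lra.
  - apply pow_lt; lra.
  - intros T T' HT HT'. exact (image_affine_correspondence p mu a b n T T' Hmu Hab HT HT').
Qed.

(** * Part (b): symmetric measures *)

(* For a symmetric mu and odd k, the reflection induces A |-> C0 - A on the
   k-th moment set, fixing T_k. *)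
Lemma reflection_correspondence p mu a b k T : a < b -> is_matrix_measure p a b mu ->
  symmetric_measure p a b mu -> (-1) ^ k = -1 ->
  (forall j, (j <= k)%nat -> is_moment p mu a b j (T j)) ->
  exists C0, msym p C0 /\
    (forall A, moment_set p a b T k A -> moment_set p a b T k (Fmap (-1) C0 A)) /\
    meq p (T k) (Fmap (-1) C0 (T k)).
Proof.
  intros Hab Hmu Hsym Hk HT. set (c0 := a + b).
  assert (Hphi : forall t, a <= t <= b -> a <= -1 * t + c0 <= b) by (intros; unfold c0; lra).
  assert (Hpsi : forall y, a <= y <= b -> a <= (y - c0) / -1 <= b).
  { intros y Hy. replace ((y - c0) / -1) with (c0 - y) by field. unfold c0; lra. }
  assert (Rel : forall j, (j <= k)%nat -> meq p (T j) (AM (-1) c0 j T)).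
  { apply (pf_affine_relation p a b a b mu mu (-1) c0 k T T); auto; try lra.
    intros B HB i j Hi Hj. rewrite (Hsym B HB) by auto. unfold pf.
    apply (mm_ext p a b mu Hmu); auto.
    - apply borel_preimage; auto. apply affine_borel; lra.
    - intros x. unfold c0. replace (-1 * x + (a + b)) with (a + b - x) by ring. tauto. }
  assert (T0 : meq p (T O) idm) by (apply (mom0 p mu a b); auto; apply HT; lia).
  exists (Ccst (-1) c0 k T).
  replace (Fmap (-1)) with (Fmap ((-1) ^ k)) by (rewrite Hk; reflexivity).
  split; [| split].
  - apply msym_Ccst. intros i Hi. apply (int_sym p mu a b (fun x => x ^ i)); auto. apply HT; lia.
  - intros A. apply (affine_ms_fwd p a b a b (-1) c0 Hab ltac:(lra) Hphi Hpsi k T T A T0).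
    intros j Hj1 Hj2; apply Rel; lia.
  - eapply meq_trans; [apply Rel; auto | apply AM_Fmap].
Qed.

Lemma part_b (p : nat) (mu : mmeasure) (a b : R) (n : nat) (U : Mat) :
  a < b -> is_matrix_measure p a b mu -> symmetric_measure p a b mu -> (1 <= n)%nat ->
  canonical_moment p a b mu (2 * n - 1) U -> meq p U half_idm.
Proof.
  intros Hab Hmu Hsym Hn CU. apply (canonical_reflection p a b mu (2 * n - 1)); auto.
  intros T HT. apply (reflection_correspondence p mu a b); auto.
  replace (2 * n - 1)%nat with (S (2 * (n - 1))) by lia. apply pow_1_odd.
Qed.

Lemma sq_le x c : 0 <= x -> 0 <= c -> x * x <= c * c -> x <= c.
Proof.
  intros Hx Hc H. destruct (Rle_dec x c); auto. exfalso.
  assert (c * c < x * x) by (apply Rle_lt_trans with (c * x);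
    [apply Rmult_le_compat_l | apply Rmult_lt_compat_r]; lra). lra.
Qed.

Lemma sq_diff_le a b : 0 <= a -> 0 <= b -> Rabs ((a - b) * (a - b)) <= Rabs (a * a - b * b).
Proof.
  intros Ha Hb. pose proof (Rle_0_sqr (a - b)) as Q. unfold Rsqr in Q.
  rewrite (Rabs_right ((a - b) * (a - b))) by lra.
  destruct (Rle_dec b a).
  - rewrite Rabs_right; [nra | apply Rle_ge; nra].
  - rewrite Rabs_left; nra.
Qed.

Lemma sqrt_diff s t : 0 <= s -> 0 <= t -> Rabs (sqrt s - sqrt t) <= sqrt (Rabs (s - t)).
Proof.
  intros Hs Ht. pose proof (sqrt_pos s). pose proof (sqrt_pos t).
  pose proof (sqrt_sqrt s Hs). pose proof (sqrt_sqrt t Ht).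
  pose proof (sqrt_pos (Rabs (s - t))). pose proof (sqrt_sqrt (Rabs (s - t)) (Rabs_pos _)).
  apply sq_le; auto; [apply Rabs_pos |]. rewrite H4, <- Rabs_mult.
  replace (Rabs (s - t)) with (Rabs (sqrt s * sqrt s - sqrt t * sqrt t)) by (rewrite H1, H2; auto).
  apply sq_diff_le; auto.
Qed.

Lemma sq_close t y d : 0 <= t -> 0 <= y -> 0 < d -> Rabs (t * t - y) <= d * d -> Rabs (t - sqrt y) <= d.
Proof.
  intros Ht Hy Hd H. pose proof (sqrt_pos y). pose proof (sqrt_sqrt y Hy).
  apply sq_le; [apply Rabs_pos | lra |]. rewrite <- Rabs_mult. eapply Rle_trans; [| apply H].
  replace (t * t - y) with (t * t - sqrt y * sqrt y) by (rewrite H1; auto). apply sq_diff_le; auto.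
Qed.

Lemma sqrt_le1 y : 0 <= y <= 1 -> 0 <= sqrt y <= 1.
Proof.
  intros H. pose proof (sqrt_pos y). pose proof (sqrt_sqrt y ltac:(lra)).
  split; auto. apply sq_le; lra.
Qed.

Lemma sq_borel c : borel (fun x => x ^ 2 <= c).
Proof.
  destruct (Rlt_dec c 0).
  - apply borel_ext with (fun _ => False); [apply borel_empty |].
    intros x; split; [tauto |]. intros. pose proof (pow2_ge_0 x). lra.
  - apply borel_ext with (fun x => - sqrt c <= x <= sqrt c); [apply borel_cc |].
    intros x. pose proof (sqrt_pos c). pose proof (sqrt_sqrt c ltac:(lra)). split; intros; nra.
Qed.

Lemma sqrt_borel c : borel (fun y => sqrt y <= c).
Proof.
  destruct (Rlt_dec c 0).
  - apply borel_ext with (fun _ => False); [apply borel_empty |].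
    intros x; split; [tauto |]. intros. pose proof (sqrt_pos x). lra.
  - apply borel_ext with (fun y => y <= c * c); [constructor |].
    intros y. destruct (Rle_dec y 0).
    + rewrite sqrt_neg_0 by auto. split; intros; nra.
    + pose proof (sqrt_pos y). pose proof (sqrt_sqrt y ltac:(lra)). split; intros; nra.
Qed.

Lemma ucont_sqrt g : ucont 0 1 g -> ucont 0 1 (fun y => g (sqrt y)).
Proof.
  intros Hg eps He. destruct (Hg eps He) as [d [Hd H]]. exists (d * d); split; [nra |].
  intros s t Hs Ht Hst. apply H; try apply sqrt_le1; auto.
  eapply Rle_trans; [apply sqrt_diff; lra |]. apply sq_le; [apply sqrt_pos | lra |].
  rewrite sqrt_sqrt by apply Rabs_pos. auto.
Qed.

(* A partition (x, xi) of [0,1] pulls back under t |-> t^2 to a partition of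
   [-1,1] with 2n pieces: for l < n the nonnegative t with t^2 in cell l, for
   n <= l < 2n the negative t with t^2 in cell (l - n); tags +-sqrt(xi). *)
Definition fold_index (n l : nat) : nat := if Nat.ltb l n then l else (l - n)%nat.

Definition sq_piece (n : nat) (x : nat -> R) (l : nat) : R -> Prop :=
  fun t => (if Nat.ltb l n then 0 <= t else t < 0) /\ cell x (fold_index n l) (t ^ 2).

Definition sq_tag (n : nat) (xi : nat -> R) (l : nat) : R :=
  (if Nat.ltb l n then 1 else -1) * sqrt (xi (fold_index n l)).

Lemma fold_index_lt n l : (l < n + n)%nat -> (fold_index n l < n)%nat.
Proof. intros Hl. unfold fold_index. destruct (Nat.ltb l n) eqn:E; rewrite ?Nat.ltb_lt, ?Nat.ltb_ge in E; lia. Qed.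

Lemma sq_piece_borel n x l : borel (sq_piece n x l).
Proof.
  unfold sq_piece. apply borel_and; [destruct (Nat.ltb l n); [apply borel_ge | apply borel_lt] |].
  apply (borel_preimage (fun t => t ^ 2) sq_borel), borel_cell.
Qed.

Lemma sq_pullback_gpart d n x xi : 0 < d -> spart 0 1 (d * d) n x xi ->
  gpart (-1) 1 d (n + n) (sq_piece n x) (sq_tag n xi).
Proof.
  intros Hd HS. destruct (spart_gpart _ _ _ _ _ _ HS) as [[_ [Hc Hdis]] [Ht Hf]].
  assert (Q : forall t, -1 <= t <= 1 -> 0 <= t ^ 2 <= 1) by (intros; split; [apply pow2_ge_0 | simpl; nra]).
  unfold sq_piece, sq_tag.
  split; [split; [| split] | split].
  - intros l _. apply sq_piece_borel.
  - intros t Ht1. destruct (Hc _ (Q t Ht1)) as [l [Hl Hcl]]. unfold fold_index.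
    destruct (Rle_dec 0 t).
    + exists l. rewrite (proj2 (Nat.ltb_lt l n) Hl). split; [lia | auto].
    + exists (n + l)%nat. rewrite (proj2 (Nat.ltb_ge (n + l) n)) by lia.
      replace (n + l - n)%nat with l by lia. split; [lia | split; auto; lra].
  - intros t l r Ht1 Hl Hr [S1 H1] [S2 H2]. unfold fold_index in *.
    destruct (Nat.ltb l n) eqn:El; destruct (Nat.ltb r n) eqn:Er;
      rewrite ?Nat.ltb_lt, ?Nat.ltb_ge in El, Er; try lra.
    + apply (Hdis (t ^ 2)); auto.
    + assert (l - n = r - n)%nat by (apply (Hdis (t ^ 2)); auto; lia). lia.
  - intros l Hl. pose proof (sqrt_le1 _ (Ht _ (fold_index_lt n l Hl))).
    destruct (Nat.ltb l n); lra.
  - intros l t Hl Ht1 [Hs Hcl]. unfold fold_index in *.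
    destruct (Nat.ltb l n) eqn:E; rewrite ?Nat.ltb_lt, ?Nat.ltb_ge in E.
    + rewrite Rmult_1_l. apply sq_close; auto; [apply Ht; auto |].
      replace (t * t) with (t ^ 2) by ring. apply Hf; auto.
    + replace (t - -1 * sqrt (xi (l - n)%nat)) with (- (- t - sqrt (xi (l - n)%nat))) by ring.
      rewrite Rabs_Ropp. apply sq_close; try lra; [apply Ht; lia |].
      replace (- t * - t) with (t ^ 2) by ring. apply Hf; auto; lia.
Qed.

Lemma sq_pullback_sum p sig g n x i j : is_matrix_measure p (-1) 1 sig -> (i < p)%nat -> (j < p)%nat ->
  gsum p (pf (fun t => t ^ 2) sig) n (cell x) g i j
  = gsum p sig (n + n) (sq_piece n x) (fun l => g (fold_index n l)) i j.
Proof.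
  intros Hs Hi Hj. unfold gsum, pf. rewrite sumR_split, <- sumR_plus.
  apply sumR_ext; intros l Hl. unfold fold_index.
  rewrite (proj2 (Nat.ltb_lt l n) Hl), (proj2 (Nat.ltb_ge (n + l) n)) by lia.
  replace (n + l - n)%nat with l by lia. rewrite <- Rmult_plus_distr_l. f_equal.
  rewrite (mm_fin p (-1) 1 sig Hs 2 (fun k => match k with O => sq_piece n x l
                                                     | _ => sq_piece n x (n + l) end)); auto.
  - simpl. ring.
  - intros [|[|k]] Hk; [apply sq_piece_borel | apply sq_piece_borel | lia].
  - unfold sq_piece, fold_index.
    rewrite (proj2 (Nat.ltb_lt l n) Hl), (proj2 (Nat.ltb_ge (n + l) n)) by lia.
    intros [|[|k]] [|[|k']] t Hk Hk' Hne [H1 _] [H2 _]; try lia; lra.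
  - apply (borel_preimage (fun t => t ^ 2) sq_borel), borel_cell.
  - unfold sq_piece, fold_index.
    rewrite (proj2 (Nat.ltb_lt l n) Hl), (proj2 (Nat.ltb_ge (n + l) n)) by lia.
    replace (n + l - n)%nat with l by lia.
    intros t; split.
    + intros H. destruct (Rle_dec 0 t); [exists O | exists 1%nat]; split; try lia; split; auto; lra.
    + intros [[|[|k]] [Hk [_ H]]]; auto; lia.
Qed.

Lemma int_sq p sig g M : is_matrix_measure p (-1) 1 sig ->
  is_integral p sig (-1) 1 (fun x => g (x ^ 2)) M -> ucont (-1) 1 (fun x => g (x ^ 2)) ->
  is_integral p (pf (fun x => x ^ 2) sig) 0 1 g M.
Proof.
  intros Hs HI Hu. apply (int_transfer p (-1) 1 0 1 sig) with (f := fun x => g (x ^ 2)); auto; try lra.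
  intros d eta Hd He. exists (d * d); split; [nra |]. intros n x xi HS.
  pose proof (spart_gpart _ _ _ _ _ _ HS) as [_ [Ht _]].
  exists (n + n)%nat, (sq_piece n x), (sq_tag n xi), (fun l => g (xi (fold_index n l))).
  split; [apply sq_pullback_gpart; auto | split].
  - intros l Hl _. unfold sq_tag.
    assert (Hx : 0 <= xi (fold_index n l)) by apply Ht, fold_index_lt, Hl.
    replace (((if Nat.ltb l n then 1 else -1) * sqrt (xi (fold_index n l))) ^ 2)
      with (sqrt (xi (fold_index n l)) ^ 2) by (destruct (Nat.ltb l n); ring).
    rewrite pow2_sqrt, Rminus_diag, Rabs_R0 by auto. lra.
  - intros i j Hi Hj. apply sq_pullback_sum; auto.
Qed.

Lemma int_sqrt p rho g M : is_matrix_measure p 0 1 rho ->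
  is_integral p rho 0 1 (fun y => g (sqrt y)) M -> ucont 0 1 (fun y => g (sqrt y)) ->
  ucont (-1) 1 g -> is_integral p (pf sqrt rho) (-1) 1 g M.
Proof.
  intros Hr HI Hu Hg. apply (int_transfer p 0 1 (-1) 1 rho) with (f := fun y => g (sqrt y)); auto; try lra.
  apply pf_sums_transfer with (psi := fun y => Rmax 0 y ^ 2).
  - apply sqrt_borel.
  - intros t Ht. pose proof (sqrt_le1 t Ht). lra.
  - intros y Hy. unfold Rmax; destruct (Rle_dec 0 y); simpl; nra.
  - intros d eta Hd He. destruct (Hg eta He) as [dg [Hdg HG]].
    exists (Rmin (d / 2) dg); split; [apply Rmin_pos; lra |].
    intros y t Hy Ht Hyt. pose proof (Rmin_l (d / 2) dg). pose proof (Rmin_r (d / 2) dg).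
    pose proof (sqrt_le1 t Ht). set (m := Rmax 0 y).
    assert (Hm : 0 <= m <= 1 /\ Rabs (sqrt t - m) <= Rabs (sqrt t - y) /\ Rabs (y - m) <= Rabs (sqrt t - y)).
    { unfold m, Rmax. destruct (Rle_dec 0 y).
      - repeat split; try lra. rewrite Rminus_diag, Rabs_R0; apply Rabs_pos.
      - unfold Rabs; repeat destruct Rcase_abs; lra. }
    destruct Hm as [Hm1 [Hm2 Hm3]]. split.
    + pose proof (sqrt_sqrt t ltac:(lra)).
      replace (t - m ^ 2) with ((sqrt t - m) * (sqrt t + m)) by (simpl; nra).
      rewrite Rabs_mult, (Rabs_right (sqrt t + m)) by lra.
      apply Rle_trans with (Rabs (sqrt t - m) * 2); [apply Rmult_le_compat_l; [apply Rabs_pos | lra] | lra].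
    + simpl. rewrite Rmult_1_r, sqrt_square by (unfold m, Rmax; destruct (Rle_dec 0 y); lra).
      apply HG; auto; lra.
Qed.

Lemma sq_mm p r : is_matrix_measure p (-1) 1 r -> is_matrix_measure p 0 1 (pf (fun x => x ^ 2) r).
Proof.
  intros Hr. apply pf_mm with (-1) 1; auto; [apply sq_borel |].
  intros x Hx. split; [apply pow2_ge_0 | simpl; nra].
Qed.

Lemma sqrt_mm p r : is_matrix_measure p 0 1 r -> is_matrix_measure p (-1) 1 (pf sqrt r).
Proof.
  intros Hr. apply pf_mm with 0 1; auto; [apply sqrt_borel |].
  intros x Hx. pose proof (sqrt_le1 x Hx); lra.
Qed.

Lemma sq_mom p r i M : is_matrix_measure p (-1) 1 r -> is_moment p r (-1) 1 (2 * i) M ->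
  is_moment p (pf (fun x => x ^ 2) r) 0 1 i M.
Proof.
  intros Hr H. apply int_sq; auto.
  - apply (int_fext p r (-1) 1 (fun x => x ^ (2 * i))); auto. intros; apply pow_mult.
  - intros eps He. destruct (ucont_pow (-1) 1 (2 * i) eps He) as [d [Hd K]].
    exists d; split; auto. intros. rewrite <- !pow_mult. auto.
Qed.

(* The reflection t |-> -t of [-1,1], written as an affine map. *)
Definition refl (t : R) : R := -1 * t + 0.

Lemma refl_borel c : borel (fun x => refl x <= c).
Proof. apply affine_borel; lra. Qed.

Lemma refl_moment p nu j M : is_matrix_measure p (-1) 1 nu -> is_moment p nu (-1) 1 j M ->
  is_moment p (pf refl nu) (-1) 1 j (fun a b => (-1) ^ j * M a b).
Proof.
  intros Hnu HM. unfold is_moment, refl.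
  apply (int_affine p (-1) 1 (-1) 1 nu (-1) 0 (fun y => y ^ j)); auto; try lra.
  - intros; lra.
  - intros y Hy. replace ((y - 0) / -1) with (- y) by field. lra.
  - apply (int_fext p nu (-1) 1 (fun y => (-1) ^ j * y ^ j)); [| apply int_scal; auto].
    intros; rewrite <- Rpow_mult_distr. f_equal; ring.
  - apply (ucont_comp_aff (-1) 1 (-1) 0 (fun y => y ^ j)). intros; apply ucont_pow.
Qed.

Lemma odd_moment_zero p sig m M : is_matrix_measure p (-1) 1 sig -> symmetric_measure p (-1) 1 sig ->
  (-1) ^ m = -1 -> is_moment p sig (-1) 1 m M -> meq p M (fun _ _ => 0).
Proof.
  intros Hs Hsym Hm HM.
  assert (H1 : is_moment p sig (-1) 1 m (fun a b => (-1) ^ m * M a b)).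
  { apply int_mext with (pf refl sig); [| apply refl_moment; auto].
    intros B HB i j Hi Hj. rewrite (Hsym B HB) by auto. unfold pf, refl.
    apply (mm_ext p (-1) 1 sig Hs); auto; [apply borel_preimage; auto; apply refl_borel |].
    intros x. replace (-1 + 1 - x) with (-1 * x + 0) by ring. tauto. }
  intros i j Hi Hj. pose proof (int_unique p sig (-1) 1 _ _ _ ltac:(lra) HM H1 i j Hi Hj).
  rewrite Hm in *. lra.
Qed.

(* The symmetric measure sigma on [-1,1] built from rho on [0,1]:
   sigma = (rho o sqrt^{-1} + its reflection) / 2, so that sigma([-x,x]) = rho([0,x^2]). *)
Definition sym_of (rho : mmeasure) : mmeasure :=
  fun B i j => / 2 * pf sqrt rho B i j + / 2 * pf refl (pf sqrt rho) B i j.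

Lemma mix_mm p a b mu nu : is_matrix_measure p a b mu -> is_matrix_measure p a b nu ->
  is_matrix_measure p a b (fun B i j => / 2 * mu B i j + / 2 * nu B i j).
Proof.
  intros [P1 [A1 [C1 N1]]] [P2 [A2 [C2 N2]]]. split; [| split; [| split]].
  - intros B HB. destruct (P1 B HB) as [S1 Q1]. destruct (P2 B HB) as [S2 Q2]. split.
    + intros i j Hi Hj. rewrite S1, S2; auto.
    + intros v. rewrite qform_lin. specialize (Q1 v). specialize (Q2 v). lra.
  - intros A C HA Hd HC HCx i j Hi Hj.
    assert (K : Un_cv (fun _ => / 2) (/ 2))
      by (intros e He; exists O; intros; unfold Rdist; rewrite Rminus_diag, Rabs_R0; auto).
    pose proof (CV_plus _ _ _ _ (CV_mult _ _ _ _ (A1 A C HA Hd HC HCx i j Hi Hj) K)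
                               (CV_mult _ _ _ _ (A2 A C HA Hd HC HCx i j Hi Hj) K)) as X.
    intros e He. destruct (X e He) as [N HN]. exists N. intros m Hm. specialize (HN m Hm).
    rewrite sumR_plus, !sumR_scal. unfold Rdist in *.
    match goal with |- Rabs ?u < _ => match type of HN with Rabs ?w < _ => replace u with w by ring end end.
    auto.
  - intros B HB Ho i j Hi Hj. cbv beta. rewrite (C1 B HB Ho i j Hi Hj), (C2 B HB Ho i j Hi Hj); ring.
  - intros i j Hi Hj. cbv beta. rewrite (N1 i j Hi Hj), (N2 i j Hi Hj). field.
Qed.

Lemma sym_of_mm p rho : is_matrix_measure p 0 1 rho -> is_matrix_measure p (-1) 1 (sym_of rho).
Proof.
  intros Hr. pose proof (sqrt_mm p rho Hr). apply mix_mm; auto.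
  apply pf_mm with (-1) 1; auto; [apply refl_borel | unfold refl; intros; lra].
Qed.

Lemma sym_of_mom p rho j K : is_matrix_measure p 0 1 rho ->
  is_integral p rho 0 1 (fun y => sqrt y ^ j) K ->
  is_moment p (sym_of rho) (-1) 1 j (fun a b => / 2 * K a b + / 2 * ((-1) ^ j * K a b)).
Proof.
  intros Hr HK. pose proof (sqrt_mm p rho Hr) as H1.
  assert (HK' : is_moment p (pf sqrt rho) (-1) 1 j K).
  { apply int_sqrt; auto; [apply (ucont_sqrt (fun y => y ^ j)) |]; apply ucont_pow. }
  apply int_mix; auto. apply refl_moment; auto.
Qed.

Lemma cells_agree p nu mu : is_matrix_measure p 0 1 nu -> is_matrix_measure p 0 1 mu ->
  (forall y, 0 <= y <= 1 -> meq p (nu (fun t => 0 <= t <= y)) (mu (fun t => 0 <= t <= y))) ->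
  forall d n x xi, spart 0 1 d n x xi -> forall l, (l < n)%nat -> meq p (nu (cell x l)) (mu (cell x l)).
Proof.
  intros Hn Hm H d n x xi HS l Hl i j Hi Hj.
  pose proof (spart_mono _ _ _ _ _ _ HS) as Mo. destruct HS as [Hn0 [H0 [Hend Hx]]].
  assert (Hb : forall k, (k <= n)%nat -> 0 <= x k <= 1)
    by (intros k Hk; rewrite <- H0, <- Hend; split; apply Mo; lia).
  destruct l as [|l].
  - assert (E : forall t, cell x 0 t <-> 0 <= t <= x 1%nat).
    { intros t. unfold cell. rewrite H0. split; [intros [[[_ A]|[A _]] B]; [split; auto | lia] |].
      intros [A B]; split; auto. }
    rewrite (mm_ext p 0 1 nu Hn (cell x 0) (fun t => 0 <= t <= x 1%nat)),
      (mm_ext p 0 1 mu Hm (cell x 0) (fun t => 0 <= t <= x 1%nat)); auto; try apply borel_cell.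
    apply H; auto; apply Hb; lia.
  - (* cell (l+1) = [0, x_{l+2}] minus [0, x_{l+1}] *)
    assert (Dec : forall r, is_matrix_measure p 0 1 r ->
      r (cell x (S l)) i j = r (fun t => 0 <= t <= x (S (S l))) i j - r (fun t => 0 <= t <= x (S l)) i j).
    { intros r Hr.
      rewrite (mm_fin p 0 1 r Hr 2 (fun k => match k with O => fun t => 0 <= t <= x (S l)
                                                   | _ => cell x (S l) end)
                 (fun t => 0 <= t <= x (S (S l)))); auto.
      - simpl; ring.
      - intros [|[|k]] Hk; try lia; [apply borel_cc | apply borel_cell].
      - intros [|[|k]] [|[|k']] t Hk Hk' Hne A B; try lia; simpl in A, B; unfold cell in *.
        + destruct B as [[[E _]|[_ E]] _]; [lia | lra].
        + destruct A as [[[E _]|[_ E]] _]; [lia | lra].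
      - apply borel_cc.
      - intros t. assert (x (S l) < x (S (S l))) by (apply Hx; lia).
        assert (0 <= x (S l)) by (apply Hb; lia). split.
        + intros [A B]. destruct (Rle_dec t (x (S l))); [exists O | exists 1%nat]; split; try lia; try lra.
          unfold cell; split; auto. right; split; [lia | lra].
        + intros [[|[|k]] [Hk A]]; try lia; [lra |].
          unfold cell in A. destruct A as [[[E _]|[_ E]] B]; [lia | lra]. }
    rewrite (Dec nu Hn), (Dec mu Hm), !H; auto; apply Hb; lia.
Qed.

Lemma int_cells p nu mu g M : is_matrix_measure p 0 1 nu -> is_matrix_measure p 0 1 mu ->
  (forall y, 0 <= y <= 1 -> meq p (nu (fun t => 0 <= t <= y)) (mu (fun t => 0 <= t <= y))) ->
  is_integral p nu 0 1 g M -> is_integral p mu 0 1 g M.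
Proof.
  intros Hn Hm H HI. rewrite int_spart in HI |- *. intros eps He. destruct (HI eps He) as [d [Hd K]].
  exists d; split; auto. intros n x xi HS i j Hi Hj. specialize (K n x xi HS i j Hi Hj). unfold gsum in *.
  rewrite (sumR_ext n _ (fun l => g (xi l) * nu (cell x l) i j)); auto.
  intros l Hl. rewrite (cells_agree p nu mu Hn Hm H d n x xi HS l Hl); auto.
Qed.

(** * Part (c): the symmetric measure with sigma([-x,x]) = mu([0,x^2]) *)

Lemma even_moments p mu sig n T T' : is_matrix_measure p 0 1 mu -> is_matrix_measure p (-1) 1 sig ->
  (forall x, 0 <= x -> meq p (sig (fun t => - x <= t <= x)) (mu (fun t => 0 <= t <= x ^ 2))) ->
  (forall j, (j <= n)%nat -> is_moment p mu 0 1 j (T j)) ->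
  (forall j, (j <= 2 * n)%nat -> is_moment p sig (-1) 1 j (T' j)) ->
  forall j, (j <= n)%nat -> meq p (T' (2 * j)%nat) (T j).
Proof.
  intros Hmu Hs Hrel HT HT' j Hj. pose proof (sq_mm p sig Hs) as Hsq.
  apply (int_unique p mu 0 1 (fun x => x ^ j)); [lra | | apply HT; auto].
  apply (int_cells p (pf (fun x => x ^ 2) sig)); auto; [| apply sq_mom; auto; apply HT'; lia].
  intros y Hy i k Hi Hk. unfold pf. pose proof (sqrt_pos y). pose proof (sqrt_sqrt y ltac:(lra)).
  rewrite (mm_ext p (-1) 1 sig Hs _ (fun x => - sqrt y <= x <= sqrt y)); auto.
  - rewrite (Hrel (sqrt y) H i k Hi Hk). apply (mm_ext p 0 1 mu Hmu); auto; [apply borel_cc |].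
    intros t. rewrite pow2_sqrt by lra. tauto.
  - exact (borel_preimage (fun x => x ^ 2) sq_borel _ (borel_cc 0 y)).
  - intros x. simpl. rewrite Rmult_1_r. split; intros [A B]; split; nra.
Qed.

Lemma moment_set_sym_of p T T' n A : (1 <= n)%nat ->
  (forall i, (1 <= i)%nat -> (i < n)%nat -> meq p (T' (2 * i)%nat) (T i)) ->
  (forall i, (S (2 * i) < 2 * n)%nat -> meq p (T' (S (2 * i))) (fun _ _ => 0)) ->
  moment_set p 0 1 T n A -> moment_set p (-1) 1 T' (2 * n) A.
Proof.
  intros Hn Heven Hodd [r [Hr [Hl Ht]]]. exists (sym_of r). split; [apply sym_of_mm; auto | split].
  - intros j Hj1 Hj2. destruct (Nat.Even_or_Odd j) as [[i ->]|[i ->]].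
    + eapply int_meq; [| apply (sym_of_mom p r (2 * i) (T i)); auto].
      * intros a b Ha Hb. rewrite pow_1_even, (Heven i) by (auto; lia). field.
      * apply (int_fext p r 0 1 (fun y => y ^ i)); [| apply Hl; lia].
        intros y Hy. rewrite pow_mult, pow2_sqrt; lra.
    + replace (2 * i + 1)%nat with (S (2 * i)) by lia.
      destruct (int_exists p 0 1 r Hr ltac:(lra) (fun y => sqrt y ^ S (2 * i))) as [K HK].
      { apply (ucont_sqrt (fun y => y ^ S (2 * i))), ucont_pow. }
      eapply int_meq; [| apply (sym_of_mom p r (S (2 * i)) K); auto].
      intros a b Ha Hb. rewrite pow_1_odd, (Hodd i) by (auto; lia). field.
  - eapply int_meq; [| apply (sym_of_mom p r (2 * n) A); auto].
    + intros a b Ha Hb. rewrite pow_1_even. field.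
    + apply (int_fext p r 0 1 (fun y => y ^ n)); auto.
      intros y Hy. rewrite pow_mult, pow2_sqrt; lra.
Qed.

Lemma moment_set_sq p T T' n B :
  (forall i, (1 <= i)%nat -> (i < n)%nat -> meq p (T' (2 * i)%nat) (T i)) ->
  moment_set p (-1) 1 T' (2 * n) B -> moment_set p 0 1 T n B.
Proof.
  intros Heven [r [Hr [Hl Ht]]]. exists (pf (fun x => x ^ 2) r).
  split; [apply sq_mm; auto | split; [| apply sq_mom; auto]].
  intros j Hj1 Hj2. eapply int_meq; [apply Heven; auto | apply sq_mom; auto; apply Hl; lia].
Qed.

Lemma square_correspondence p mu sig n T T' : (1 <= n)%nat ->
  is_matrix_measure p 0 1 mu -> is_matrix_measure p (-1) 1 sig -> symmetric_measure p (-1) 1 sig ->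
  (forall x, 0 <= x -> meq p (sig (fun t => - x <= t <= x)) (mu (fun t => 0 <= t <= x ^ 2))) ->
  (forall j, (j <= n)%nat -> is_moment p mu 0 1 j (T j)) ->
  (forall j, (j <= 2 * n)%nat -> is_moment p sig (-1) 1 j (T' j)) ->
  exists C0, msym p C0 /\
    (forall A, moment_set p 0 1 T n A -> moment_set p (-1) 1 T' (2 * n) (Fmap 1 C0 A)) /\
    (forall B, moment_set p (-1) 1 T' (2 * n) B -> exists A, moment_set p 0 1 T n A /\ meq p B (Fmap 1 C0 A)) /\
    meq p (T' (2 * n)%nat) (Fmap 1 C0 (T n)).
Proof.
  intros Hn Hmu Hs Hsym Hrel HT HT'.
  pose proof (even_moments p mu sig n T T' Hmu Hs Hrel HT HT') as Even.
  assert (Heven : forall i, (1 <= i)%nat -> (i < n)%nat -> meq p (T' (2 * i)%nat) (T i))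
    by (intros; apply Even; lia).
  assert (Hodd : forall i, (S (2 * i) < 2 * n)%nat -> meq p (T' (S (2 * i))) (fun _ _ => 0)).
  { intros i Hi. apply (odd_moment_zero p sig (S (2 * i))); auto; [apply pow_1_odd | apply HT'; lia]. }
  assert (Id : forall A, meq p (Fmap 1 (fun _ _ => 0) A) A) by (intros A i j _ _; unfold Fmap; ring).
  exists (fun _ _ => 0). split; [intros i j _ _; reflexivity | split; [| split]].
  - intros A HA. apply ms_meq with A; [| apply meq_sym, Id]. apply moment_set_sym_of with T; auto.
  - intros B HB. exists B. split; [apply moment_set_sq with T'; auto | apply meq_sym, Id].
  - eapply meq_trans; [apply Even; auto | apply meq_sym, Id].
Qed.

Lemma part_c (p : nat) (mu sigma : mmeasure) :
  is_matrix_measure p 0 1 mu -> is_matrix_measure p (-1) 1 sigma -> symmetric_measure p (-1) 1 sigma ->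
  (forall x, 0 <= x -> meq p (sigma (fun t => - x <= t <= x)) (mu (fun t => 0 <= t <= x ^ 2))) ->
  (forall (n : nat) (U : Mat), (1 <= n)%nat ->
     canonical_moment p (-1) 1 sigma (2 * n - 1) U -> meq p U half_idm) /\
  (forall (n : nat) (U V : Mat), (1 <= n)%nat ->
     canonical_moment p (-1) 1 sigma (2 * n) U -> canonical_moment p 0 1 mu n V -> meq p U V).
Proof.
  intros Hmu Hs Hsym Hrel. split.
  - intros n U Hn CU. apply (part_b p sigma (-1) 1 n U); auto; lra.
  - intros n U V Hn CU CV.
    apply (canonical_transport p 0 1 mu n V (-1) 1 sigma (2 * n) U 1); auto; try lra.
    intros T T' HT HT'. apply (square_correspondence p mu sigma n T T'); auto.
Qed.

Theorem lemma3p1 :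
  (* (a) *)
  (forall (p : nat) (mu : mmeasure) (a b : R) (n : nat) (U V : Mat),
     is_matrix_measure p 0 1 mu -> a < b ->
     canonical_moment p 0 1 mu n U ->
     canonical_moment p a b (image_affine a b mu) n V ->
     meq p V U) /\
  (* (b) *)
  (forall (p : nat) (mu : mmeasure) (a b : R) (n : nat) (U : Mat),
     a < b -> is_matrix_measure p a b mu -> symmetric_measure p a b mu ->
     (1 <= n)%nat ->
     canonical_moment p a b mu (2 * n - 1) U ->
     meq p U half_idm) /\
  (* (c) *)
  (forall (p : nat) (mu sigma : mmeasure),
     is_matrix_measure p 0 1 mu ->
     is_matrix_measure p (-1) 1 sigma ->
     symmetric_measure p (-1) 1 sigma ->
     (forall x, 0 <= x ->
        meq p (sigma (fun t => - x <= t <= x)) (mu (fun t => 0 <= t <= x ^ 2))) ->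
     (forall (n : nat) (U : Mat), (1 <= n)%nat ->
        canonical_moment p (-1) 1 sigma (2 * n - 1) U -> meq p U half_idm) /\
     (forall (n : nat) (U V : Mat), (1 <= n)%nat ->
        canonical_moment p (-1) 1 sigma (2 * n) U ->
        canonical_moment p 0 1 mu n V -> meq p U V)).
Proof.
  split; [exact part_a | split; [exact part_b | exact part_c]].
Qed.
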